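(* Let $\mathcal{R}$ be a cyclic proof system induced by a trace interpretation $\iota\colon\mathcal{R}\to\mathcal{T}_\mathcal{A}$ for a (finite) activation algebra $\mathcal{A}$. Then $\mathit{strip}\colon\mathrm{R}(\mathcal{R})\to\mathcal{R}$ is a proof morphism; in particular, if $\Pi$ is a proof of $\Gamma;(\Theta,\sigma)$ in $\mathrm{R}(\mathcal{R})$, then $\mathit{strip}(\Pi)$ is a proof of $\Gamma$ in $\mathcal{R}$.
   Context: An activation algebra $\mathcal{A}=(A,\le,\vee,0,\alpha)$ is a finite join-semilattice with least element $0$ and distinguished $\alpha\neq0$; $\mathcal{T}_\mathcal{A}$ has finite sets as objects, relations $R\subseteq X\times A\times Y$ as morphisms $X\to Y$, composition $R'\circ R=\{(x,c,z)\mid\exists y,a,b:(x,a,y)\in R,(y,b,z)\in R',a\vee b=c\}$, identities $\{(x,0,x)\}$. A composable sequence $(\tau_i)$ satisfies the trace condition if there are $k_0<k_1<\cdots$ and $s_i\in\mathrm{dom}(\tau_{k_i})$ with $(s_i,\alpha,s_{i+1})\in\tau_{k_{i+1}-1}\circ\cdots\circ\tau_{k_i}$ for all $i$. Cyclic trees: a tree is a nonempty prefix-closed $T\subseteq\omega^*$ ($\le$ prefix order, $\mathrm{Chld}(t)=\{ti\in T\}$). A cyclic tree $(T,\beta)$: finite tree and partial map $\beta$ from leaves to inner nodes with $\beta(t)<t$; $t\in\mathrm{dom}(\beta)$ are buds, $\beta(t)$ companions. A branch is $\pi\in T^\omega$ with $\pi_0=\varepsilon$, $\pi_{i+1}\in\mathrm{Chld}(\pi_i)$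 if $\pi_i$ is not a leaf, and $\pi_i$ a bud with $\pi_{i+1}=\beta(\pi_i)$ if $\pi_i$ is a leaf. Derivation systems: a set $\textsc{Seq}$ of sequents, a set of rules, each rule $R$ having a conclusion and premises $(\Gamma,\Delta_1,\dots,\Delta_n)$. A preproof is $(C,\lambda,\delta)$ with $C=(T,\beta)$ a cyclic tree, $\lambda\colon T\to\textsc{Seq}$ with $\lambda(t)=\lambda(\beta(t))$ for buds, and partial $\delta$ from non-bud nodes to rules such that each non-bud $t$ is either an open leaf (not in $\mathrm{dom}(\delta)$) or $\delta(t)$ has conclusion $\lambda(t)$ and premises $\lambda(t1),\dots,\lambda(tn)$ where $\mathrm{Chld}(t)=\{t1,\dots,tn\}$. A cyclic proof system is a derivation system with a designated set of assumption-free preproofs (proofs). A trace interpretation $\iota\colon\mathcal{R}\to\mathcal{T}_\mathcal{A}$ assigns each sequent an object $\iota(\Gamma)$ and each rule $R$ with conclusion $\Gamma$ and premises $\Delta_i$ morphisms $r_i\colon\iota(\Gamma)\to\iota(\Delta_i)$; the induced cyclic proof system $\iota(\mathcal{R})$ takes as proofs the assumption-free preproofs such that along every branch $\pi$ the sequence of morphisms ($\delta(\pi_i)_j$ when $\pi_{i+1}=\pi_ij$, identity when $\pi_{i+1}=\beta(\pi_i)$) satisfies the trace condition. A preproof morphism $f\colon\mathcal{R}\to\mathcal{R}'$ maps sequents to sequents and each $\mathcal{R}$-rule with conclusion $\Gamma$ and premises $\Delta_i$ to an $\mathcal{R}'$-preproof with endsequent $f(\Gamma)$ and open leaves $f(\Delta_1),\dots,f(\Delta_n)$;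 it translates an $\mathcal{R}$-preproof $\Pi$ to the $\mathcal{R}'$-preproof $f(\Pi)$ obtained by replacing each rule application by its assigned preproof (composing at open leaves) and keeping bud–companion links. It is a proof morphism if $f(\Pi)$ is a proof whenever $\Pi$ is. Safra boards: with a fixed countable chip set $\mathcal{C}\supseteq\omega$, a Safra board on finite $X$ is $(\Theta,\sigma)$, $\Theta\subseteq\mathcal{C}$ finite linearly ordered (control), $\sigma\colon X\times A\to\mathcal{P}(\mathcal{P}(\Theta))$ with every chip in some stack; $\gamma$ covered iff it is the maximum of no stack. Transitions: $r$-successor for $r\colon X\to Y$ (move stacks: $\sigma^*(y,a)=\{S\in\sigma(x,b)\mid(x,c,y)\in r,\ a=b\vee c\}$; then for every $y$ with $\sigma^*(y,\alpha)\ne\emptyset$ add a fresh chip $\iota(y)\notin\Theta$ (distinct for distinct $y$, ordered above all old chips) on top of every stack in $\sigma^*(y,\alpha)$ and move these stacks to $(y,0)$, leaving $(y,\alpha)$ empty; control = old chips still occurring followed by the new chips); weakening (remove some stacks); population (add the empty stack to some positions $(x,0)$); $\gamma$-reset for covered $\gamma$ (replace every stack $S\ni\gamma$ by $\{z\in S\mid z\le\gamma\}$); in each case the new control consists of the chips still occurring, in the inherited order. Reset proof system $\mathrm{R}(\mathcal{R})$: sequents $\Gamma;(\Theta,\sigma)$ with $\Gamma\in\textsc{Seq}$ and $(\Theta,\sigma)$ a board on $\iota(\Gamma)$. Rules: structural rules Weak, $\textsc{Reset}_\gamma$, Pop with conclusion $\Gamma;(\Theta,\sigma)$ and one premise $\Gamma;(\Theta',\sigma')$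 where $(\Theta',\sigma')$ arises by weakening, $\gamma$-reset, or population; and for every $\mathcal{R}$-rule $R$ (conclusion $\Gamma$, premises $\Delta_i$, maps $r_i$) and board $(\Theta,\sigma)$ on $\iota(\Gamma)$, a rule with conclusion $\Gamma;(\Theta,\sigma)$ and premises $\Delta_i;(\Theta_i,\sigma_i)$, $(\Theta_i,\sigma_i)$ an $r_i$-successor of $(\Theta,\sigma)$. For a bud $t$, let $\Theta$ be the longest common prefix of the controls on the path from $\beta(t)$ to $t$; an invariant is a nonempty prefix $\theta$ of $\Theta$ such that $\textsc{Reset}_{\max(\theta)}$ is applied on that path. An assumption-free $\mathrm{R}(\mathcal{R})$-preproof is a proof iff every bud's path has an invariant. The preproof morphism $\mathit{strip}\colon\mathrm{R}(\mathcal{R})\to\mathcal{R}$ maps $\Gamma;(\Theta,\sigma)\mapsto\Gamma$, maps each structural rule to the one-node preproof of $\Gamma$ (open leaf), and maps each annotated copy of an $\mathcal{R}$-rule $R$ to the one-step preproof applying $R$. Thus $\mathit{strip}(\Pi)$ erases annotations and contracts structural-rule steps. *)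

From Stdlib Require Import List.
From mathcomp Require Import all_boot finmap.
Set Implicit Arguments.
Unset Strict Implicit.
Unset Printing Implicit Defensive.
Local Open Scope fset_scope.

(* Activation algebras: finite join-semilattice with least element 0   *)
(* and a distinguished alpha <> 0.  (The order is a <= b :<-> a \/ b = b;
   0 least means 0 \/ a = a.)                                            *)
Record ActAlg := {
  acar :> Type;
  ajoin : acar -> acar -> acar;
  azero : acar;
  aalpha : acar;
  ajoinA : forall a b c, ajoin a (ajoin b c) = ajoin (ajoin a b) c;
  ajoinC : forall a b, ajoin a b = ajoin b a;
  ajoinI : forall a, ajoin a a = a;
  ajoin0 : forall a, ajoin azero a = a;
  aalpha_neq0 : aalpha <> azero;
  afinite : exists l : list acar, forall a, In a l
}.

Record DerivSys := {
  dseq : Type;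
  drule : Type;
  dconcl : drule -> dseq;
  darity : drule -> nat;
  dprem : drule -> nat -> dseq
}.

(* Tree nodes are words over omega; the i-th child of t is rcons t i
   (children of a node with an n-premise rule are t0,...,t(n-1)). *)
Notation node := (seq nat).

Record preproof (D : DerivSys) := {
  ptree : node -> Prop;
  pbud  : node -> option node;
  plab  : node -> dseq D;
  prule : node -> option (drule D)
}.

Section Preproofs.
Variable D : DerivSys.
Variable P : preproof D.

Definition is_leaf (t : node) : Prop :=
  ptree P t /\ forall i, ~ ptree P (rcons t i).

Definition strict_prefix (s t : node) : Prop := prefix s t /\ s <> t.

Definition is_preproof : Prop :=
  ptree P [::] /\
  (forall t i, ptree P (rcons t i) -> ptree P t) /\
  (exists l : seq node, forall t, ptree P t -> t \in l) /\
  (forall t s, pbud P t = Some s ->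
     is_leaf t /\ ptree P s /\ ~ is_leaf s /\ strict_prefix s t /\
     plab P t = plab P s) /\
  (forall t R, prule P t = Some R ->
     ptree P t /\ pbud P t = None /\ dconcl R = plab P t /\
     (forall i, ptree P (rcons t i) <-> i < darity R) /\
     (forall i, i < darity R -> plab P (rcons t i) = dprem R i)) /\
  (forall t, ptree P t -> pbud P t = None -> prule P t = None -> is_leaf t).

Definition assumption_free : Prop :=
  forall t, ptree P t -> pbud P t = None -> prule P t <> None.

Definition is_branch (pi : nat -> node) : Prop :=
  pi 0 = [::] /\
  forall i,
    (~ is_leaf (pi i) -> exists j, pi i.+1 = rcons (pi i) j /\ ptree P (pi i.+1)) /\
    (is_leaf (pi i) -> pbud P (pi i) = Some (pi i.+1)).

End Preproofs.

(* Trace interpretations iota : R -> T_A.  Objects iota(Gamma) are finite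
   subsets of a universe Pos; morphisms are relations in Pos x A x Pos
   with domain iota(concl) and codomain iota(prem i).                   *)
Record TraceInterp (D : DerivSys) (A : ActAlg) := {
  Pos : Type;
  iobj : dseq D -> Pos -> Prop;
  iobj_fin : forall G, exists l : list Pos, forall x, iobj G x -> In x l;
  imor : drule D -> nat -> Pos -> A -> Pos -> Prop;
  imor_dom : forall R i x a y, imor R i x a y ->
     i < darity R /\ iobj (dconcl R) x /\ iobj (dprem R i) y
}.

Arguments iobj {D A} _ _ _.
Arguments imor {D A} _ _ _ _ _ _.
Arguments Pos {D A} _.

Section TraceCond.
Variables (A : ActAlg) (Pos : Type).
Variable dom : nat -> Pos -> Prop.
Variable tau : nat -> Pos -> A -> Pos -> Prop.

(* segcomp m n = tau_(m+n-1) o ... o tau_m  (identity if n = 0) *)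
Fixpoint segcomp (m n : nat) (x : Pos) (c : A) (z : Pos) : Prop :=
  match n with
  | 0 => x = z /\ c = azero A
  | n'.+1 => exists y a b, segcomp m n' x a y /\ tau (m + n') y b z /\
                           c = ajoin a b
  end.

Definition trace_cond : Prop :=
  exists (k : nat -> nat) (s : nat -> Pos),
    (forall i, k i < k i.+1) /\
    forall i, dom (k i) (s i) /\
              segcomp (k i) (k i.+1 - k i) (s i) (aalpha A) (s i.+1).
End TraceCond.

Section TraceProofs.
Variables (D : DerivSys) (A : ActAlg) (I : TraceInterp D A).
Variable P : preproof D.

Definition branch_dom (pi : nat -> node) (i : nat) : Pos I -> Prop :=
  iobj I (plab P (pi i)).

Definition branch_mor (pi : nat -> node) (i : nat) (x : Pos I) (a : A)
    (y : Pos I) : Prop :=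
  (exists j R, pi i.+1 = rcons (pi i) j /\ prule P (pi i) = Some R /\
               imor I R j x a y) \/
  (pbud P (pi i) = Some (pi i.+1) /\ x = y /\ a = azero A /\
   iobj I (plab P (pi i)) x).

Definition trace_proof : Prop :=
  is_preproof P /\ assumption_free P /\
  forall pi, is_branch P pi -> trace_cond (branch_dom pi) (branch_mor pi).
End TraceProofs.

(* Safra boards.  Chips are natural numbers (C = omega).  A board is a
   control Theta (a duplicate-free list, its order being the linear order
   on the control) and sigma : X x A -> P(P(Theta)).                     *)
Record board (Pos : Type) (A : Type) := {
  ctrl : seq nat;
  stk : Pos -> A -> {fset {fset nat}}
}.

Section Boards.
Variables (Pos : Type) (A : ActAlg).
Implicit Types (b : board Pos A) (X : Pos -> Prop).

Definition occurs b (z : nat) : Prop :=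
  exists x a S, S \in stk b x a /\ z \in S.

Definition board_on X b : Prop :=
  uniq (ctrl b) /\
  (forall x a, ~ X x -> stk b x a = fset0) /\
  (forall x a S, S \in stk b x a -> forall z, z \in S -> z \in ctrl b) /\
  (forall z, z \in ctrl b -> occurs b z).

Definition chip_le (Th : seq nat) (z g : nat) : bool := index z Th <= index g Th.

Definition is_max (Th : seq nat) (g : nat) (S : {fset nat}) : Prop :=
  g \in S /\ forall z, z \in S -> chip_le Th z g.

Definition covered b (g : nat) : Prop :=
  g \in ctrl b /\ forall x a S, S \in stk b x a -> ~ is_max (ctrl b) g S.

Definition restricted_ctrl (Th : seq nat) b' (Th' : seq nat) : Prop :=
  subseq Th' Th /\ forall z, z \in Th' <-> (z \in Th /\ occurs b' z).

Definition weakening b b' : Prop :=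
  (forall x a, fsubset (stk b' x a) (stk b x a)) /\
  restricted_ctrl (ctrl b) b' (ctrl b').

Definition population b b' : Prop :=
  (forall x a, a <> azero A -> stk b' x a = stk b x a) /\
  (forall x, stk b' x (azero A) = stk b x (azero A) \/
             stk b' x (azero A) = stk b x (azero A) `|` [fset fset0]) /\
  restricted_ctrl (ctrl b) b' (ctrl b').

Definition trunc (Th : seq nat) (g : nat) (S : {fset nat}) : {fset nat} :=
  if g \in S then [fset z in S | chip_le Th z g] else S.

Definition reset (g : nat) b b' : Prop :=
  (forall x a, stk b' x a = [fset trunc (ctrl b) g S | S in stk b x a]) /\
  restricted_ctrl (ctrl b) b' (ctrl b').

Definition successor (r : Pos -> A -> Pos -> Prop) b b' : Prop :=
  exists (sstar : Pos -> A -> {fset {fset nat}}) (nu : Pos -> nat)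
         (old newc : seq nat),
    (forall y a S, S \in sstar y a <->
        exists x bb c, S \in stk b x bb /\ r x c y /\ a = ajoin bb c) /\
    (forall y, sstar y (aalpha A) != fset0 -> nu y \notin ctrl b) /\
    (forall y1 y2, sstar y1 (aalpha A) != fset0 -> sstar y2 (aalpha A) != fset0 ->
        nu y1 = nu y2 -> y1 = y2) /\
    (forall y a, a <> aalpha A -> a <> azero A -> stk b' y a = sstar y a) /\
    (forall y, stk b' y (aalpha A) = fset0) /\
    (forall y, stk b' y (azero A) =
        sstar y (azero A) `|` [fset S `|` [fset nu y] | S in sstar y (aalpha A)]) /\
    restricted_ctrl (ctrl b) b' old /\
    uniq newc /\
    (forall z, z \in newc <-> exists y, sstar y (aalpha A) != fset0 /\ z = nu y) /\
    ctrl b' = old ++ newc.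
End Boards.

Section ResetSystem.
Variables (D : DerivSys) (A : ActAlg) (I : TraceInterp D A).

Definition Board := board (Pos I) A.
Definition RSeq := (dseq D * Board)%type.

Inductive RRaw :=
  | RWeak  of dseq D & Board & Board
  | RReset of nat & dseq D & Board & Board
  | RPop   of dseq D & Board & Board
  | RAnn   of drule D & Board & seq Board.

Definition rraw_concl (r : RRaw) : RSeq :=
  match r with
  | RWeak G b _ | RReset _ G b _ | RPop G b _ => (G, b)
  | RAnn R b _ => (dconcl R, b)
  end.

Definition rraw_arity (r : RRaw) : nat :=
  match r with
  | RAnn R _ _ => darity R
  | _ => 1
  end.

Definition rraw_prem (r : RRaw) (i : nat) : RSeq :=
  match r with
  | RWeak G _ b' | RReset _ G _ b' | RPop G _ b' => (G, b')
  | RAnn R b bs => (dprem R i, nth b bs i)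
  end.

Definition rraw_valid (r : RRaw) : Prop :=
  match r with
  | RWeak G b b' => board_on (iobj I G) b /\ board_on (iobj I G) b' /\
                    weakening b b'
  | RReset g G b b' => board_on (iobj I G) b /\ board_on (iobj I G) b' /\
                       covered b g /\ reset g b b'
  | RPop G b b' => board_on (iobj I G) b /\ board_on (iobj I G) b' /\
                   population b b'
  | RAnn R b bs => board_on (iobj I (dconcl R)) b /\ size bs = darity R /\
      forall i, i < darity R ->
        board_on (iobj I (dprem R i)) (nth b bs i) /\
        successor (imor I R i) b (nth b bs i)
  end.

Definition RRule := {r : RRaw | rraw_valid r}.

Definition RSys : DerivSys := {|
  dseq := RSeq;
  drule := RRule;
  dconcl := fun r => rraw_concl (proj1_sig r);
  darity := fun r => rraw_arity (proj1_sig r);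
  dprem := fun r => rraw_prem (proj1_sig r)
|}.

Definition is_structural (r : RRaw) : Prop :=
  match r with RAnn _ _ _ => False | _ => True end.

Definition is_reset_of (g : nat) (r : RRaw) : Prop :=
  match r with RReset g' _ _ _ => g' = g | _ => False end.

Section ResetProofs.
Variable P : preproof RSys.

Definition on_path (s t u : node) : Prop := prefix s u /\ prefix u t.

Definition is_lcp (s t : node) (Th : seq nat) : Prop :=
  (forall u, ptree P u -> on_path s t u -> prefix Th (ctrl (plab P u).2)) /\
  (forall Th', (forall u, ptree P u -> on_path s t u ->
                 prefix Th' (ctrl (plab P u).2)) -> prefix Th' Th).

Definition has_invariant (t s : node) : Prop :=
  exists Th, is_lcp s t Th /\
  exists th, th <> [::] /\ prefix th Th /\
    exists u r, ptree P u /\ prefix s u /\ strict_prefix u t /\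
      prule P u = Some r /\ is_reset_of (last 0 th) (proj1_sig r).

Definition reset_proof : Prop :=
  is_preproof P /\ assumption_free P /\
  forall t s, pbud P t = Some s -> has_invariant t s.

(* strip: contraction of structural steps.  contract t u : the node t of
   P corresponds to the node u of strip(P) (digits taken at structural
   nodes are erased). *)
Definition struct_node (t : node) : Prop :=
  exists r, prule P t = Some r /\ is_structural (proj1_sig r).

Inductive contract : node -> node -> Prop :=
  | contract_nil : contract [::] [::]
  | contract_struct t u i : contract t u -> struct_node t ->
      contract (rcons t i) u
  | contract_ann t u i : contract t u -> ~ struct_node t ->
      contract (rcons t i) (rcons u i).

Definition unann (r : RRule) : option (drule D) :=
  match proj1_sig r with RAnn R _ _ => Some R | _ => None end.

Definition is_strip (P' : preproof D) : Prop :=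
  (forall u, ptree P' u <-> exists t, ptree P t /\ contract t u) /\
  (forall t u, ptree P t -> ~ struct_node t -> contract t u ->
     plab P' u = (plab P t).1 /\
     prule P' u = obind unann (prule P t) /\
     (pbud P t = None -> pbud P' u = None) /\
     (forall s, pbud P t = Some s ->
        exists s', contract s s' /\ pbud P' u = Some s')) /\
  (forall u, ~ ptree P' u -> pbud P' u = None /\ prule P' u = None).

End ResetProofs.
End ResetSystem.

(* Contraction is injective on
      the annotated nodes, every chain of structural steps ends in an
      annotated node, and every bud path contains an annotated node: on a
      purely structural cycle, the reset of the invariant chip g would make
      g the top of all its stacks all around the cycle, whereas g must be
      covered when it is reset.
   2. Persistence.  Along any infinite path of P some chip g stays in the
      control from some time on and is reset infinitely often: take, among
      the buds visited infinitely often, an invariant of minimal length; the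
      paths of these buds are linked by shared nodes, so all their
      invariants extend the minimal one, whose top chip is g.
   3. The Safra argument.  Along any sequence of boards with such a chip,
      the relations of the steps satisfy the trace condition: stacks
      containing g are witnessed by alpha-segments between consecutive
      g-resets, and König's lemma turns the levels of witnesses into an
      infinite trace.
   A branch of strip(P) lifts to an infinite path of P, and 2 and 3 give
   its trace condition. *)
From Stdlib Require Import List Classical ClassicalEpsilon.
From mathcomp Require Import all_boot finmap zify.
Set Implicit Arguments.
Unset Strict Implicit.
Unset Printing Implicit Defensive.
Local Open Scope fset_scope.

Definition asbool (Q : Prop) : bool :=
  if excluded_middle_informative Q then true else false.

Lemma asboolP (Q : Prop) : reflect Q (asbool Q).
Proof. by rewrite /asbool; case: excluded_middle_informative => h; constructor. Qed.

Lemma ajoin0r (A : ActAlg) (a : A) : ajoin a (azero A) = a.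
Proof. by rewrite ajoinC ajoin0. Qed.

(* Chip order.  Filtering a duplicate-free control keeps the relative order
   of the surviving chips; this is what makes the order on chips stable
   under all board transitions. *)
Lemma index_filter_le (s : seq nat) (p : pred nat) (z w : nat) :
  uniq s -> z \in filter p s -> w \in filter p s ->
  (index z (filter p s) <= index w (filter p s)) = (index z s <= index w s).
Proof.
elim: s => [|x s IH] //= /andP[xs us].
case px: (p x) => /=.
  rewrite !inE => zs ws.
  case: (eqVneq x z) => [e|zx]; first by subst z.
  case: (eqVneq x w) => [e|wx]; first by subst w.
  rewrite ltnS IH //.
    by move: zs; rewrite eq_sym (negbTE zx).
  by move: ws; rewrite eq_sym (negbTE wx).
move=> zs ws.
have /negbTE -> : x != z by apply/eqP=> e; move: zs; rewrite -e mem_filter px.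
have /negbTE -> : x != w by apply/eqP=> e; move: ws; rewrite -e mem_filter px.
by rewrite ltnS IH.
Qed.

Lemma chip_le_subseq (Th Th' : seq nat) z w :
  uniq Th -> subseq Th' Th -> z \in Th' -> w \in Th' ->
  chip_le Th' z w = chip_le Th z w.
Proof.
move=> u /(subseq_uniqP u) e; rewrite /chip_le e => zi wi.
by rewrite index_filter_le // -e.
Qed.

Lemma chip_le_cat (Th old newc : seq nat) z w :
  uniq Th -> subseq old Th -> z \in old -> w \in old ->
  chip_le (old ++ newc) z w = chip_le Th z w.
Proof.
move=> u s zi wi; rewrite /chip_le !index_cat zi wi.
exact: (chip_le_subseq u s zi wi).
Qed.

Lemma chip_le_antisym (Th : seq nat) z w :
  z \in Th -> chip_le Th z w -> chip_le Th w z -> z = w.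
Proof.
rewrite /chip_le => zi h1 h2.
have e : index z Th = index w Th by apply/eqP; rewrite eqn_leq h1 h2.
have wi : w \in Th by rewrite -index_mem -e index_mem.
by rewrite -(nth_index 0 zi) e nth_index.
Qed.

Lemma is_max_transfer (Q : seq nat) Th Th' g (S : {fset nat}) :
  {subset S <= Q} ->
  (forall z w, z \in Q -> w \in Q -> chip_le Th' z w = chip_le Th z w) ->
  (is_max Th' g S <-> is_max Th g S).
Proof.
move=> sq e; rewrite /is_max; split=> -[gS h]; split=> // z zS.
  by rewrite -e ?sq //; exact: h.
by rewrite e ?sq //; exact: h.
Qed.

Lemma restricted_chip_le (Pos : Type) (A : ActAlg) Th (b' : board Pos A) Th' z w :
  uniq Th -> restricted_ctrl Th b' Th' -> z \in Th' -> w \in Th' ->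
  chip_le Th' z w = chip_le Th z w.
Proof. move=> u [s _]; exact: chip_le_subseq. Qed.

Section Segments.
Variables (A : ActAlg) (Pos : Type) (tau : nat -> Pos -> A -> Pos -> Prop).

Lemma segcomp_nil m x : segcomp tau m (m - m) x (azero A) x.
Proof. by rewrite subnn. Qed.

Lemma segcomp_snoc m n y v x c z : m <= n -> segcomp tau m (n - m) y v x ->
  tau n x c z -> segcomp tau m (n.+1 - m) y (ajoin v c) z.
Proof.
move=> mn h t; rewrite subSn //=; exists x, v, c; split => //.
by rewrite subnKC.
Qed.
End Segments.

Section BoardFacts.
Variables (Pos : Type) (A : ActAlg).
Implicit Types (b : board Pos A) (X : Pos -> Prop).

Lemma board_on_dom X b x a S : board_on X b -> S \in stk b x a -> X x.
Proof.
move=> [_ [h _]] Si; case: (classic (X x)) => // nx.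
by move: Si; rewrite (h x a nx).
Qed.

Lemma board_on_chip X b x a S z :
  board_on X b -> S \in stk b x a -> z \in S -> z \in ctrl b.
Proof. move=> [_ [_ [h _]]] Si zS; exact: (h x a S Si z zS). Qed.

Lemma board_on_occurs X b z : board_on X b -> z \in ctrl b ->
  exists x a S, S \in stk b x a /\ z \in S.
Proof. by move=> [_ [_ [_ h]]] /h. Qed.

Lemma board_on_uniq X b : board_on X b -> uniq (ctrl b).
Proof. by case. Qed.

Lemma is_max_restricted X X' b b' g x a S :
  board_on X b -> board_on X' b' -> restricted_ctrl (ctrl b) b' (ctrl b') ->
  S \in stk b' x a -> (is_max (ctrl b') g S <-> is_max (ctrl b) g S).
Proof.
move=> bo bo' rc Si; apply: (is_max_transfer (Q := ctrl b')).
  by move=> z; exact: board_on_chip bo' Si.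
by move=> z w zi wi; exact: restricted_chip_le (board_on_uniq bo) rc zi wi.
Qed.

Lemma weak_pop_stack b b' x a S g :
  weakening b b' \/ population b b' -> S \in stk b' x a -> g \in S ->
  S \in stk b x a.
Proof.
case=> [[sub _]|[p1 [p2 _]]] Si gS; first exact: (fsubsetP (sub x a)).
case: (classic (a = azero A)) => [ea|na]; last by rewrite -p1.
subst a; case: (p2 x) => e; first by rewrite -e.
by move: Si; rewrite e in_fsetU in_fset1 => /orP[//|/eqP e']; rewrite e' in gS.
Qed.

Lemma reset_stack g' g b b' x a S' :
  reset g' b b' -> S' \in stk b' x a -> g \in S' ->
  exists2 S, S \in stk b x a & g \in S /\ S' = trunc (ctrl b) g' S.
Proof.
move=> [rs _]; rewrite rs => /imfsetP [S /= SS ->] gS; exists S => //.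
split=> //; move: gS; rewrite /trunc; case: ifP => // _.
by rewrite !inE => /andP[].
Qed.

Definition g_topped (g : nat) b :=
  forall x a S, S \in stk b x a -> g \in S -> is_max (ctrl b) g S.

Lemma reset_topped g b b' X X' :
  board_on X b -> board_on X' b' -> reset g b b' -> g_topped g b'.
Proof.
move=> bo bo' rs x a S' Si gS.
have [S SS [g0S eS]] := reset_stack rs Si gS.
have ub := board_on_uniq bo.
split=> // z zS; rewrite (restricted_chip_le ub rs.2) //;
  try exact: board_on_chip bo' Si _.
by move: zS; rewrite eS /trunc g0S !inE => /andP[].
Qed.

Lemma structural_topped g b b' X X' :
  board_on X b -> board_on X' b' -> g_topped g b ->
  (weakening b b' \/ population b b' \/ exists g', reset g' b b') ->
  g_topped g b'.
Proof.
move=> bo bo' Z h x a S' Si gS.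
have ub := board_on_uniq bo.
have chb' : {subset S' <= ctrl b'} by move=> z; exact: board_on_chip bo' Si.
have ord : forall z w, restricted_ctrl (ctrl b) b' (ctrl b') ->
    z \in ctrl b' -> w \in ctrl b' ->
    chip_le (ctrl b') z w = chip_le (ctrl b) z w.
  by move=> z w rc zi wi; exact: restricted_chip_le rc zi wi.
case: h => [wp|[wp|[g' rs]]].
- have Si0 := weak_pop_stack (or_introl wp) Si gS.
  apply: (proj2 (is_max_transfer g chb' (fun z w => ord z w wp.2))).
  exact: Z Si0 gS.
- have Si0 := weak_pop_stack (or_intror wp) Si gS.
  apply: (proj2 (is_max_transfer g chb' (fun z w => ord z w wp.2.2))).
  exact: Z Si0 gS.
- have [S SS [gS0 eS]] := reset_stack rs Si gS.
  have [_ hm] := Z _ _ _ SS gS0.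
  split=> // z zS; rewrite ord ?chb' //; last exact: rs.2.
  by apply: hm; move: zS; rewrite eS /trunc; case: ifP => // _; rewrite !inE => /andP[].
Qed.
End BoardFacts.

Lemma finite_pigeonhole (X : Type) (l : list X) (R : X -> nat -> Prop) :
  (forall k, exists y, In y l /\ R y k) ->
  (forall y k k', k' <= k -> R y k -> R y k') ->
  exists y, In y l /\ forall k, R y k.
Proof.
elim: l => [|h t IH] H mono; first by have [y [[] _]] := H 0.
case: (classic (exists k0, ~ R h k0)) => [[k0 nk0]|nex]; last first.
  by exists h; split; [left | move=> k; apply: NNPP => nk; apply: nex; exists k].
have [y [yt Ry]] : exists y, In y t /\ forall k, R y k.
  apply: IH => // k; have [y [[ey|yt] Ry]] := H (maxn k k0).
    by subst y; case: nk0; apply: (mono _ _ _ _ Ry); exact: leq_maxr.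
  by exists y; split=> //; apply: (mono _ _ _ _ Ry); exact: leq_maxl.
by exists y; split=> //; right.
Qed.

Section Konig.
Variables (X : Type) (L : nat -> X -> Prop) (E : X -> X -> Prop).
Hypothesis L_finite : forall j, exists l, forall x, L j x -> In x l.
Hypothesis L_pred : forall j x, L j.+1 x -> exists y, L j y /\ E y x.
Hypothesis L_nonempty : forall j, exists x, L j x.

Fixpoint chain (j : nat) (x : X) (k : nat) (z : X) : Prop :=
  match k with
  | 0 => x = z /\ L j x
  | k'.+1 => exists y, chain j x k' y /\ E y z /\ L (j + k'.+1) z
  end.

Lemma chain_start j x k z : chain j x k z -> L j x.
Proof. by elim: k z => [|k IH] z /=; [case | move=> [y [/IH]]]. Qed.

Lemma chain_back k : forall j z, L (j + k) z -> exists x, chain j x k z.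
Proof.
elim: k => [|k IH] j z; first by rewrite addn0 => h; exists z.
move=> Lz; move: (Lz); rewrite addnS => /L_pred [y [Ly Ey]].
by have [x hx] := IH _ _ Ly; exists x, y.
Qed.

Lemma chain_behead k : forall j x z, chain j x k.+1 z ->
  exists y, E x y /\ chain j.+1 y k z.
Proof.
elim: k => [|k IH] j x z.
  by move=> [y [[<- Lx] [Ez Lz]]]; exists z; rewrite -addn1.
move=> [w [hw [Ew Lz]]]; have [y [Exy hy]] := IH _ _ _ hw.
by exists y; split=> //; exists w; rewrite addSnnS.
Qed.

Lemma chain_shorten k : forall k' j x z, k' <= k -> chain j x k z ->
  exists z', chain j x k' z'.
Proof.
elim: k => [|k IH] k' j x z; first by rewrite leqn0 => /eqP-> h; exists z.
rewrite leq_eqVlt => /orP[/eqP-> h|]; first by exists z.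
by rewrite ltnS => lk [y [/(IH _ _ _ _ lk) ]].
Qed.

Definition unbounded j x := forall k, exists z, chain j x k z.

Lemma unbounded_step j x : unbounded j x -> exists y, E x y /\ unbounded j.+1 y.
Proof.
move=> hi; have [l hl] := L_finite j.+1.
have [y [_ hy]] : exists y, In y l /\ forall k, E x y /\ exists z, chain j.+1 y k z.
  apply: finite_pigeonhole.
    move=> k; have [z hz] := hi k.+1; have [y [Exy hy]] := chain_behead hz.
    by exists y; split; [apply: hl; exact: chain_start hy | split=> //; exists z].
  by move=> y k k' kk [Exy [z /(chain_shorten kk)]].
by exists y; split; [case: (hy 0) | move=> k; case: (hy k)].
Qed.

Lemma unbounded_root : exists x, unbounded 0 x.
Proof.
have [l hl] := L_finite 0.
have [x [_ hx]] : exists x, In x l /\ forall k, exists z, chain 0 x k z.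
  apply: finite_pigeonhole; last by move=> y k k' kk [z /(chain_shorten kk)].
  move=> k; have [z hz] := L_nonempty k.
  have [x hx] := chain_back (j := 0) (k := k) (z := z) hz.
  by exists x; split; [apply: hl; exact: chain_start hx | exists z].
by exists x.
Qed.

Fixpoint konig_path j : {x | unbounded j x} :=
  match j with
  | 0 => constructive_indefinite_description _ unbounded_root
  | j'.+1 => let y := constructive_indefinite_description _
                        (unbounded_step (proj2_sig (konig_path j'))) in
             exist _ (proj1_sig y) (proj2 (proj2_sig y))
  end.

(* Choose, level by level, a successor that still starts arbitrarily long
   chains. *)
Theorem konig : exists f : nat -> X, forall j, L j (f j) /\ E (f j) (f j.+1).
Proof.
exists (fun j => proj1_sig (konig_path j)) => j; split.
  by have [z /chain_start] := proj2_sig (konig_path j) 0.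
by rewrite /=; case: constructive_indefinite_description => ? [].
Qed.
End Konig.

(* The board changes allowed along a structural step (or along a bud-to-
   companion jump, which keeps the board). *)
Definition structural_change (Pos : Type) (A : ActAlg) (b b' : board Pos A) :=
  b' = b \/ weakening b b' \/ population b b' \/
  exists g, covered b g /\ reset g b b'.

(* Level j collects the points
   (n, x) reached after the (j+1)-st g0-reset that are the end of an
   alpha-segment from a point of level j-1; an invariant on the stacks
   containing g0 shows that every level is nonempty, levels are finite, and
   König's lemma yields the infinite trace. *)
Section SafraCore.
Variables (A : ActAlg) (Pos : Type).
Variable dom : nat -> Pos -> Prop.
Hypothesis dom_finite : forall n, exists l, forall x, dom n x -> In x l.
Variable b : nat -> board Pos A.
Hypothesis board_ok : forall n, board_on (dom n) (b n).
Variable tau : nat -> Pos -> A -> Pos -> Prop.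

Definition identity_step n :=
  forall x c y, tau n x c y <-> (x = y /\ c = azero A /\ dom n x).

Hypothesis step_kind : forall n,
  (identity_step n /\ structural_change (b n) (b n.+1)) \/
  successor (tau n) (b n) (b n.+1).

Variables (g0 N : nat).
Hypothesis g0_persists : forall n, N <= n -> g0 \in ctrl (b n).

Definition g0_reset n :=
  identity_step n /\ covered (b n) g0 /\ reset g0 (b n) (b n.+1).

Hypothesis g0_resets_often : forall M, exists n, M <= n /\ N <= n /\ g0_reset n.

Definition moved_stack n x a S' := exists x' a' c S,
  S \in stk (b n) x' a' /\ tau n x' c x /\ a = ajoin a' c /\ g0 \in S /\
  (is_max (ctrl (b n.+1)) g0 S' <-> is_max (ctrl (b n)) g0 S).

Definition fresh_stack n x a S' := exists x' a' c S0,
  a = azero A /\ S0 \in stk (b n) x' a' /\ tau n x' c x /\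
  aalpha A = ajoin a' c /\ g0 \in S0 /\ ~ is_max (ctrl (b n.+1)) g0 S'.

Lemma moved_identity n x a S' : identity_step n -> S' \in stk (b n) x a ->
  (is_max (ctrl (b n.+1)) g0 S' <-> is_max (ctrl (b n)) g0 S') -> g0 \in S' ->
  moved_stack n x a S'.
Proof.
move=> T Si e gS; exists x, a, (azero A), S'; split=> //; split.
  by apply/T; split=> //; split=> //; exact: board_on_dom (board_ok n) Si.
by rewrite ajoin0r.
Qed.

Lemma structural_descent n x a S' :
  identity_step n -> structural_change (b n) (b n.+1) -> ~ g0_reset n ->
  S' \in stk (b n.+1) x a -> g0 \in S' -> moved_stack n x a S'.
Proof.
move=> T step nR Si gS.
have bo := board_ok n; have bo' := board_ok n.+1.
have ub := board_on_uniq bo.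
case: step => [e|[wk|[pop|[g [cov rs]]]]].
- by rewrite e in Si; apply: moved_identity => //; rewrite e.
- apply: moved_identity => //; first exact: weak_pop_stack (or_introl wk) Si gS.
  exact: is_max_restricted bo bo' wk.2 Si.
- apply: moved_identity => //; first exact: weak_pop_stack (or_intror pop) Si gS.
  exact: is_max_restricted bo bo' pop.2.2 Si.
have ng : g <> g0 by move=> eg; apply: nR; subst g.
have [S SS [g0S eS]] := reset_stack rs Si gS.
exists x, a, (azero A), S; split=> //; split.
  by apply/T; split=> //; split=> //; exact: board_on_dom bo SS.
split; first by rewrite ajoin0r.
split=> //.
move: eS gS; rewrite /trunc; case: ifP => gS0 eS gS; last first.
  by rewrite -eS; exact: is_max_restricted bo bo' rs.2 Si.
(* g lies in both stacks below or at g0, so g0 is the top of neither *)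
have gc : g \in ctrl (b n) by exact: board_on_chip bo SS gS0.
have lg : chip_le (ctrl (b n)) g0 g by move: gS; rewrite eS !inE => /andP[].
have gS' : g \in S' by rewrite eS !inE gS0 /chip_le leqnn.
split=> -[_ h]; case: ng; apply: (chip_le_antisym gc) lg; last exact: h.
rewrite -(restricted_chip_le ub rs.2); first exact: h.
  exact: board_on_chip bo' Si gS'.
exact: board_on_chip bo' Si gS.
Qed.

Lemma successor_descent n x a S' :
  successor (tau n) (b n) (b n.+1) ->
  g0 \in ctrl (b n) -> g0 \in ctrl (b n.+1) ->
  S' \in stk (b n.+1) x a -> g0 \in S' ->
  moved_stack n x a S' \/ fresh_stack n x a S'.
Proof.
move=> [sstar [nu [old [newc [hs [hfr [_ [h1 [h2 [h3 [rc [_ [hn ec]]]]]]]]]]]]].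
move=> gb gb' Si gS.
have bo := board_ok n; have bo' := board_ok n.+1.
have oldsub : subseq old (ctrl (b n)) by case: rc.
have inold z : z \in ctrl (b n) -> z \in ctrl (b n.+1) -> z \in old.
  move=> zb; rewrite ec mem_cat => /orP[//|/hn [y [ne ez]]].
  by move: (hfr y ne); rewrite -ez zb.
have moved x' a' c : S' \in stk (b n) x' a' -> tau n x' c x -> a = ajoin a' c ->
    moved_stack n x a S'.
  move=> SS t ea; exists x', a', c, S'; do 3!split=> //; split=> //.
  apply: (is_max_transfer (Q := old)).
    by move=> z zS; apply: inold; [exact: board_on_chip bo SS zS |
                                  exact: board_on_chip bo' Si zS].
  by move=> z w zi wi; rewrite ec; exact: chip_le_cat (board_on_uniq bo) _ _ _.
case: (classic (a = aalpha A)) => [ea|na]; first by move: Si; rewrite ea h2 in_fset0.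
case: (classic (a = azero A)) => [ez|nz]; last first.
  by left; move: Si; rewrite h1 // => /hs [x' [a' [c [SS [t ea]]]]]; exact: moved SS t ea.
move: Si; rewrite ez h3 in_fsetU => /orP[/hs [x' [a' [c [SS [t ea]]]]]|].
  by left; rewrite -ez; apply: (moved _ _ _ SS t); rewrite ez.
move=> /imfsetP [S0 /= S0i eS]; right.
have ne : sstar x (aalpha A) != fset0 by apply/eqP=> e; move: S0i; rewrite e.
move: S0i => /hs [x' [a' [c [SS [t ea]]]]].
have nub : nu x \notin ctrl (b n) by exact: hfr.
exists x', a', c, S0; do 4!split=> //; split.
  by move: gS; rewrite eS in_fsetU in_fset1 => /orP[//|/eqP e]; move: nub; rewrite -e gb.
(* the fresh chip nu x lies above every old chip, in particular above g0 *)
move=> [_ h].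
have nuS : nu x \in S' by rewrite eS in_fsetU in_fset1 eqxx orbT.
have := h _ nuS; rewrite /chip_le ec !index_cat (inold _ gb gb').
have -> : nu x \in old = false.
  by apply/negbTE; apply: contra nub => nio; exact: (mem_subseq oldsub).
have : index g0 old < size old by rewrite index_mem; exact: inold.
by move=> lt le; have := leq_trans (leq_addr _ _) le; rewrite leqNgt lt.
Qed.
Definition counted_reset m : bool := (N <= m) && asbool (g0_reset m).

Fixpoint resets n := if n is m.+1 then (resets m + counted_reset m)%N else 0.

Lemma resets_mono m n : m <= n -> resets m <= resets n.
Proof.
move=> /subnKC <-; elim: (n - m) => [|d IH]; first by rewrite addn0.
by rewrite addnS /=; exact: leq_trans IH (leq_addr _ _).
Qed.

Lemma resets_pos n : 0 < resets n -> N < n.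
Proof.
elim: n => [|n IH] //=; rewrite /counted_reset.
case: (boolP (N <= n)) => [h _|_] /=; first by rewrite ltnS.
by rewrite addn0 => /IH /ltnW.
Qed.

Lemma resets_unbounded k : exists n, k <= resets n.
Proof.
elim: k => [|k [n IH]]; first by exists 0.
have [m [nm [Nm Rm]]] := g0_resets_often n.
exists m.+1; rewrite /= /counted_reset Nm; case: asboolP => // _.
by rewrite addn1 ltnS; exact: leq_trans IH (resets_mono nm).
Qed.

Fixpoint level (j : nat) (p : nat * Pos) : Prop :=
  resets p.1 = j.+1 /\ dom p.1 p.2 /\
  (if j is j'.+1 then exists q, level j' q /\ q.1 < p.1 /\
       segcomp tau q.1 (p.1 - q.1) q.2 (aalpha A) p.2 else True).

Lemma level_base j q : level j q -> resets q.1 = j.+1 /\ dom q.1 q.2.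
Proof. by case: j => [|j] [? [? _]]. Qed.

Definition witnessed j n x (a : A) := exists q v, level j q /\ q.1 <= n /\
  segcomp tau q.1 (n - q.1) q.2 v x /\ (v = a \/ v = ajoin (aalpha A) a).

Lemma witnessed_step j n x' a' c x a : witnessed j n x' a' -> tau n x' c x ->
  a = ajoin a' c -> witnessed j n.+1 x a.
Proof.
move=> [q [v [G [qn [sg ev]]]]] t ea; exists q, (ajoin v c); do 2!split=> //.
  exact: leqW.
split; first exact: (segcomp_snoc qn sg t).
by case: ev => ->; [left | right]; rewrite ea // ajoinA.
Qed.

Lemma witnessed_alpha j n x' a' c x : witnessed j n x' a' -> tau n x' c x ->
  aalpha A = ajoin a' c ->
  exists q, level j q /\ q.1 <= n /\
            segcomp tau q.1 (n.+1 - q.1) q.2 (aalpha A) x.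
Proof.
move=> [q [v [G [qn [sg ev]]]]] t ea; exists q; do 2!split=> //.
have -> : aalpha A = ajoin v c by case: ev => ->; rewrite // -ajoinA -ea ajoinI.
exact: (segcomp_snoc qn sg t).
Qed.

Definition stack_invariant n := forall x a S, S \in stk (b n) x a -> g0 \in S ->
  (is_max (ctrl (b n)) g0 S -> forall j, resets n = j.+2 -> witnessed j n x a) /\
  (~ is_max (ctrl (b n)) g0 S -> forall j, resets n = j.+1 -> witnessed j n x a).

(* At a g0-reset, g0 becomes the top of its stacks, which were witnessed
   from the previous level since g0 was covered. *)
Lemma invariant_reset_step n : stack_invariant n -> N <= n -> g0_reset n ->
  stack_invariant n.+1.
Proof.
move=> IH Nn R x a S' Si gS; have [T [[_ cov] rs]] := R.
have ec : resets n.+1 = (resets n).+1.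
  by rewrite /= /counted_reset Nn; case: asboolP => // _; rewrite addn1.
have [S SS [g0S _]] := reset_stack rs Si gS.
have nm : ~ is_max (ctrl (b n)) g0 S by exact: cov SS.
split; last by case; exact: reset_topped (board_ok n) (board_ok n.+1) rs _ _ _ Si gS.
move=> _ j; rewrite ec => -[cj].
apply: (witnessed_step (c := azero A) (proj2 (IH _ _ _ SS g0S) nm j cj));
  last by rewrite ajoin0r.
by apply/T; do 2!split=> //; exact: board_on_dom (board_ok n) SS.
Qed.

(* A fresh-chip stack at time n+1, without a reset at time n, is witnessed
   from the current level; if g0 was the top of the alpha-stack it came from,
   (n+1, x) is itself a new level point. *)
Lemma fresh_witnessed n x a S' j : stack_invariant n -> resets n.+1 = resets n ->
  S' \in stk (b n.+1) x a -> fresh_stack n x a S' -> resets n.+1 = j.+1 ->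
  witnessed j n.+1 x a.
Proof.
move=> IH ec Si [x' [a' [c [S0 [ez [S0i [t [ea [g0S0 _]]]]]]]]] cj.
have dx : dom n.+1 x by exact: board_on_dom (board_ok n.+1) Si.
rewrite ec in cj; case: (classic (is_max (ctrl (b n)) g0 S0)) => [im|nim]; last first.
  have [q [G [qn sg]]] :=
    witnessed_alpha (proj2 (IH _ _ _ S0i g0S0) nim j cj) t ea.
  exists q, (aalpha A); split=> //; split; first exact: leqW.
  by split=> //; right; rewrite ez ajoin0r.
exists (n.+1, x), (azero A); split; last by split=> //; split; [exact: segcomp_nil | left].
case: j cj => [|j] cj; (split; first exact: etrans ec cj); split=> //.
have [q [G [qn sg]]] := witnessed_alpha (proj1 (IH _ _ _ S0i g0S0) im j cj) t ea.
by exists q.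
Qed.

Lemma invariant_plain_step n : stack_invariant n -> ~~ counted_reset n ->
  stack_invariant n.+1.
Proof.
move=> IH nc x a S' Si gS.
have ec : resets n.+1 = resets n by rewrite /= (negbTE nc) addn0.
case: (posnP (resets n)) => [c0|cp]; first by split=> ? j; rewrite ec c0.
have Nn : N <= n by exact: ltnW (resets_pos cp).
have nR : ~ g0_reset n by move=> h; move: nc; rewrite /counted_reset Nn; case: asboolP.
have gb := g0_persists Nn; have gb' := g0_persists (leqW Nn).
have [mv|fr] : moved_stack n x a S' \/ fresh_stack n x a S'.
- case: (step_kind n) => [[T st]|sc]; last exact: successor_descent.
  by left; exact: structural_descent.
- move: mv => [x' [a' [c [S [SS [t [ea [gS0 ei]]]]]]]]; rewrite ec.
  have [IH1 IH2] := IH _ _ _ SS gS0.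
  split=> m j cj; apply: (witnessed_step _ t ea).
    by apply: IH1 cj; apply/ei.
  by apply: IH2 cj => /ei.
- split=> [im|_ j cj]; first by case: fr => ? [? [? [? [_ [_ [_ [_ [_ /(_ im)]]]]]]]].
  exact: fresh_witnessed IH ec Si fr cj.
Qed.

(* Initially no reset has been counted, so the invariant holds vacuously. *)
Lemma invariant_all n : stack_invariant n.
Proof.
elim: n => [|n IH]; first by move=> x a S _ _; split=> ? j.
case: (boolP (counted_reset n)) => [/andP[Nn /asboolP R]|nc].
  exact: invariant_reset_step.
exact: invariant_plain_step.
Qed.

(* Every level is inhabited: at the (j+2)-nd reset, g0 is covered, so some
   stack holds g0 below its top, and the invariant witnesses level j. *)
Lemma level_nonempty j : exists q, level j q.
Proof.
have ex : exists n, j.+2 <= resets n by exact: resets_unbounded.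
case: (ex_minnP ex) => [[|m] h1 hmin] //.
have hm : ~~ (j.+2 <= resets m) by apply/negP=> /hmin; rewrite ltnn.
move: h1 => /=; rewrite /counted_reset.
case: (boolP (N <= m)) => [Nm|_]; last by rewrite addn0 => h; move: hm; rewrite h.
case: asboolP => [[T [[_ cov] rs]]|_]; last by rewrite addn0 => h; move: hm; rewrite h.
rewrite addn1 ltnS => hc.
have cm : resets m = j.+1 by apply/eqP; rewrite eqn_leq hc andbT -ltnS ltnNge.
have [x [a [S [SS gS]]]] := board_on_occurs (board_ok m) (g0_persists Nm).
have [q [v [G _]]] := proj2 (invariant_all SS gS) (cov _ _ _ SS) j cm.
by exists q.
Qed.

Lemma points_finite T : exists l, forall q : nat * Pos, q.1 < T -> dom q.1 q.2 -> In q l.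
Proof.
elim: T => [|T [l IH]]; first by exists nil.
have [lT hT] := dom_finite T.
exists (l ++ map (fun x => (T, x)) lT) => q qT d.
apply/in_app_iff; move: qT; rewrite ltnS leq_eqVlt => /orP[/eqP e|qT]; last by left; exact: IH.
right; apply/in_map_iff; exists q.2; split; last by apply: hT; rewrite -e.
by case: q e {d} => ? ? /= ->.
Qed.

(* Level j lies before the time at which j+2 resets have happened. *)
Lemma level_finite j : exists l, forall q, level j q -> In q l.
Proof.
have [T hT] := resets_unbounded j.+2.
have [l hl] := points_finite T.
exists l => q /level_base [cq d]; apply: hl => //.
rewrite ltnNge; apply/negP => /resets_mono; rewrite cq => h.
by have := leq_trans hT h; rewrite ltnn.
Qed.

(* Consecutive points of the König chain are linked by alpha-segments. *)
Theorem safra_trace : trace_cond dom tau.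
Proof.
have pred j p : level j.+1 p -> exists q, level j q /\
    (q.1 < p.1 /\ segcomp tau q.1 (p.1 - q.1) q.2 (aalpha A) p.2).
  by move=> [_ [_ [q h]]]; exists q.
have [f hf] := @konig (nat * Pos) level _ level_finite pred level_nonempty.
exists (fun i => (f i).1), (fun i => (f i).2); split.
  by move=> i; case: (hf i) => _ [].
by move=> i; case: (hf i) => /level_base [_ d] [_ sg].
Qed.
End SafraCore.

Local Close Scope fset_scope.

Lemma prefix_rconsP (a w : node) j :
  prefix a (rcons w j) -> a = rcons w j \/ prefix a w.
Proof.
move=> /prefixP [r e]; case/lastP: r e => [|r k] e; first by left; rewrite e cats0.
right; apply/prefixP; exists r; move: e; rewrite -rcons_cat => /eqP.
by rewrite eqseq_rcons => /andP[/eqP-> _].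
Qed.

Lemma rcons_neq (t : node) j : rcons t j <> t.
Proof. by move=> /(f_equal size); rewrite size_rcons; lia. Qed.

Lemma prefix_total (a b t : node) : prefix a t -> prefix b t -> prefix a b \/ prefix b a.
Proof.
rewrite !prefixE => /eqP ea /eqP eb.
case: (leqP (size a) (size b)) => h.
  by left; apply/eqP; rewrite -eb take_takel // ea.
by right; apply/eqP; rewrite -ea take_takel ?eb // ltnW.
Qed.

Lemma prefix_size_eq (a b t : node) :
  prefix a t -> prefix b t -> size a = size b -> a = b.
Proof.
rewrite !prefixE => /eqP ea /eqP eb e; by rewrite -ea -eb e.
Qed.

Lemma prefix_antisym (a b : node) : prefix a b -> prefix b a -> a = b.
Proof.
move=> h1 h2; apply: (prefix_size_eq h1 (prefix_refl b)).
by apply/eqP; rewrite eqn_leq !size_prefix.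
Qed.

Lemma strict_prefix_child (w t : node) : strict_prefix w t ->
  exists j, prefix (rcons w j) t.
Proof.
move=> [/prefixP [[|j r] e] ne]; first by case: ne; rewrite e cats0.
by exists j; apply/prefixP; exists r; rewrite cat_rcons.
Qed.

Lemma strict_prefix_rcons (a w : node) j : strict_prefix a (rcons w j) <-> prefix a w.
Proof.
split=> [[/prefix_rconsP [//|//] ne]|h].
split; first exact: prefix_trans h (prefix_rcons _ _).
by move=> e; have := size_prefix h; rewrite e size_rcons ltnn.
Qed.

Lemma strict_prefix_trans (a b c : node) :
  strict_prefix a b -> prefix b c -> strict_prefix a c.
Proof.
move=> [ab nab] bc; split; first exact: prefix_trans ab bc.
by move=> e; subst c; apply: nab; exact: prefix_antisym.
Qed.

Lemma mem_prefix (a b : seq nat) z : prefix a b -> z \in a -> z \in b.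
Proof. by move=> /prefixP [r ->]; rewrite mem_cat => ->. Qed.

Section ResetProof.
Variables (D : DerivSys) (A : ActAlg) (I : TraceInterp D A).
Variable P : preproof (RSys I).
Hypothesis P_reset : reset_proof P.

Local Notation tree := (ptree P).

Lemma P_preproof : is_preproof P. Proof. by case: P_reset. Qed.
Lemma P_assumption_free : assumption_free P. Proof. by case: P_reset => _ []. Qed.

Lemma tree_root : tree [::]. Proof. by case: P_preproof. Qed.

Lemma tree_parent t i : tree (rcons t i) -> tree t.
Proof. by case: P_preproof => _ [h _]; exact: h. Qed.

Lemma tree_prefix s t : tree t -> prefix s t -> tree s.
Proof.
move=> ht /prefixP [r e]; subst t; elim/last_ind: r ht => [|r j IH]; first by rewrite cats0.
by rewrite -rcons_cat => /tree_parent.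
Qed.

Lemma tree_finite : exists l : seq node, forall t, tree t -> t \in l.
Proof. by case: P_preproof => _ [_ [h _]]. Qed.

Lemma tree_depth : exists B, forall t, tree t -> size t <= B.
Proof.
have [l hl] := tree_finite; exists (\max_(w <- l) size w) => t /hl tl.
by rewrite (big_rem _ tl) /= leq_maxl.
Qed.

Lemma bud_spec t s : pbud P t = Some s ->
  is_leaf P t /\ tree s /\ ~ is_leaf P s /\ strict_prefix s t /\ plab P t = plab P s.
Proof. by case: P_preproof => _ [_ [_ [h _]]]; exact: h. Qed.

Lemma rule_spec t R : prule P t = Some R ->
  tree t /\ pbud P t = None /\ dconcl R = plab P t /\
  (forall i, tree (rcons t i) <-> i < darity R) /\
  (forall i, i < darity R -> plab P (rcons t i) = dprem R i).
Proof. by case: P_preproof => _ [_ [_ [_ [h _]]]]; exact: h. Qed.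

Lemma bud_tree t s : pbud P t = Some s -> tree t.
Proof. by move/bud_spec => [[]]. Qed.

Lemma bud_no_rule t s : pbud P t = Some s -> prule P t = None.
Proof.
move=> h; case e: (prule P t) => [R|] //.
by have [_ [e2 _]] := rule_spec e; rewrite e2 in h.
Qed.

Lemma node_cases t : tree t ->
  (exists s, pbud P t = Some s) \/ (exists R, prule P t = Some R).
Proof.
move=> ht; case e: (pbud P t) => [s|]; first by left; exists s.
case e2: (prule P t) => [R|]; first by right; exists R.
by case: (P_assumption_free ht e).
Qed.

Definition structural t : bool := asbool (struct_node P t).

Lemma structuralP t : reflect (struct_node P t) (structural t).
Proof. exact: asboolP. Qed.

Lemma structural_child t : struct_node P t ->
  (forall i, tree (rcons t i) <-> i = 0) /\ (plab P (rcons t 0)).1 = (plab P t).1.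
Proof.
move=> [r [e st]]; have [_ [_ [ec [ch pl]]]] := rule_spec e.
have ar : darity r = 1 by case: r e st ec ch pl => -[].
split; first by move=> i; rewrite ch ar ltnS leqn0; split=> [/eqP|->].
by rewrite pl ?ar // -ec; case: r e st ec ch pl ar => -[].
Qed.

Lemma annotated_rule t r : prule P t = Some r -> ~ struct_node P t ->
  exists R bb bs, proj1_sig r = RAnn R bb bs.
Proof.
move=> e ns; case E: (proj1_sig r) => [G b b'|g G b b'|G b b'|R bb bs];
  try by case: ns; exists r; rewrite E.
by exists R, bb, bs.
Qed.

Fixpoint contr_rev (r : node) : node :=
  match r with
  | [::] => [::]
  | i :: r' => if structural (rev r') then contr_rev r' else rcons (contr_rev r') i
  end.
Definition contr t := contr_rev (rev t).

Lemma contr_rcons t i :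
  contr (rcons t i) = if structural t then contr t else rcons (contr t) i.
Proof. by rewrite /contr rev_rcons /= revK. Qed.

Lemma contr_annotated t i : ~ struct_node P t -> contr (rcons t i) = rcons (contr t) i.
Proof. by move=> /structuralP /negbTE nt; rewrite contr_rcons nt. Qed.

Lemma contract_contr t : contract P t (contr t).
Proof.
elim/last_ind: t => [|t i IH]; first exact: contract_nil.
rewrite contr_rcons; case: structuralP => h; first exact: contract_struct.
exact: contract_ann.
Qed.

Lemma contract_fun t u : contract P t u -> u = contr t.
Proof.
elim=> [|t' u' i _ -> st|t' u' i _ -> st] //; first by rewrite contr_rcons; case: structuralP.
by rewrite contr_annotated.
Qed.

Lemma contr_prefix s t : prefix s t -> prefix (contr s) (contr t).
Proof.
move=> /prefixP [r ->]; elim/last_ind: r => [|r j IH]; first by rewrite cats0 prefix_refl.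
rewrite -rcons_cat contr_rcons; case: ifP => _ //.
exact: prefix_trans IH (prefix_rcons _ _).
Qed.

Lemma contr_strict s t : prefix s t -> ~ struct_node P s -> s <> t ->
  size (contr s) < size (contr t).
Proof.
move=> hp ns ne; have [j hj] := strict_prefix_child (conj hp ne).
by have := size_prefix (contr_prefix hj); rewrite contr_annotated // size_rcons.
Qed.

(* Contraction is injective on the non-structural nodes of the tree: two
   such nodes w ++ r1, w ++ r2 first differ below an annotated node, and
   there the contractions differ too. *)
Lemma contr_inj_cat r1 : forall w r2, tree (w ++ r1) -> tree (w ++ r2) ->
  ~ struct_node P (w ++ r1) -> ~ struct_node P (w ++ r2) ->
  contr (w ++ r1) = contr (w ++ r2) -> r1 = r2.
Proof.
have base w j r : ~ struct_node P w -> contr w <> contr (w ++ j :: r).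
  move=> nw e; suff ne : w <> w ++ j :: r.
    by have := contr_strict (prefix_prefix w (j :: r)) nw ne; rewrite e ltnn.
  by move=> /(f_equal size) /eqP; rewrite size_cat /= -{1}[size w]addn0 eqn_add2l.
elim: r1 => [|j1 r1 IH] w [|j2 r2] t1 t2 n1 n2 e //; rewrite ?cats0 in n1 n2 e.
- by case: (base w j2 r2 n1 e).
- by case: (base w j1 r1 n2 (esym e)).
case: (eqVneq j1 j2) => [ej|nj].
  by subst j2; congr (_ :: _); apply: (IH (rcons w j1)); rewrite !cat_rcons.
have c1 : tree (rcons w j1) by apply: (tree_prefix t1); apply/prefixP; exists r1; rewrite cat_rcons.
have c2 : tree (rcons w j2) by apply: (tree_prefix t2); apply/prefixP; exists r2; rewrite cat_rcons.
case: (structuralP w) => [sw|nw].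
  have [ch _] := structural_child sw.
  by move: nj; rewrite (proj1 (ch _) c1) (proj1 (ch _) c2) eqxx.
have p1 : prefix (rcons (contr w) j1) (contr (w ++ j1 :: r1)).
  by rewrite -contr_annotated //; apply: contr_prefix; apply/prefixP; exists r1; rewrite cat_rcons.
have p2 : prefix (rcons (contr w) j2) (contr (w ++ j1 :: r1)).
  by rewrite e -contr_annotated //; apply: contr_prefix; apply/prefixP; exists r2; rewrite cat_rcons.
have /eqP := prefix_size_eq p1 p2 (etrans (size_rcons _ _) (esym (size_rcons _ _))).
by rewrite eqseq_rcons (negbTE nj) andbF.
Qed.

Lemma contr_inj t1 t2 : tree t1 -> tree t2 -> ~ struct_node P t1 -> ~ struct_node P t2 ->
  contr t1 = contr t2 -> t1 = t2.
Proof. move=> h1 h2 n1 n2 e; exact: (@contr_inj_cat t1 [::] t2). Qed.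

(* Below a node lies, along its chain of structural steps, a non-structural
   node with the same contraction and sequent: the representative of t in
   strip(P).  The chain is finite because the tree has bounded depth. *)
Lemma structural_exit t : tree t -> exists w, tree w /\ ~ struct_node P w /\
  prefix t w /\ contr w = contr t /\ (plab P w).1 = (plab P t).1 /\
  (forall v, prefix t v -> strict_prefix v w -> struct_node P v).
Proof.
have [B hB] := tree_depth.
move=> ht; move: {2}(B - size t) (leqnn (B - size t)) => k; elim: k t ht => [|k IH] t ht hk;
  (case: (structuralP t) => [st|nt]; last first).
- exists t; do 2!split=> //; split; first exact: prefix_refl.
  by do 2!split=> //; move=> v h1 [h2 h3]; case: h3; exact: prefix_antisym.
- have [ch _] := structural_child st; have := hB _ (proj2 (ch 0) erefl).
  by rewrite size_rcons => h; move: hk; rewrite leqn0 subn_eq0 leqNgt h.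
- exists t; do 2!split=> //; split; first exact: prefix_refl.
  by do 2!split=> //; move=> v h1 [h2 h3]; case: h3; exact: prefix_antisym.
have [ch lab] := structural_child st.
have c0 : tree (rcons t 0) by exact/ch.
have hk' : B - size (rcons t 0) <= k.
  by rewrite size_rcons subnS; move: hk; case: (B - size t).
have [w [tw [nw [pw [cw [lw hw]]]]]] := IH (rcons t 0) c0 hk'.
exists w; do 2!split=> //; split; first exact: prefix_trans (prefix_rcons _ _) pw.
split; first by rewrite cw contr_rcons; case: structuralP.
split; first by rewrite lw lab.
move=> v tv [vw nvw]; case: (prefix_total vw pw) => [h|h]; last exact: hw h (conj vw nvw).
case: (classic (v = rcons t 0)) => [ev|ne].
  by subst v; exact: hw (prefix_refl _) (conj vw nvw).
by move/strict_prefix_rcons: (conj h ne) => vt; rewrite (prefix_antisym vt tv).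
Qed.

Lemma structural_chain_prefix s w t : tree w -> tree t -> prefix s w -> prefix s t ->
  (forall v, prefix s v -> strict_prefix v w -> struct_node P v) ->
  prefix w t \/ strict_prefix t w.
Proof.
move=> tw tt sw st; elim/last_ind: w tw sw => [|w j IH] tw sw hs.
  by left; move: sw; rewrite prefixs0 => /eqP <-.
case: (prefix_rconsP sw) => [<-|sw']; first by left.
have hs' v : prefix s v -> strict_prefix v w -> struct_node P v.
  by move=> h1 h2; apply: hs h1 (strict_prefix_trans h2 (prefix_rcons _ _)).
have sww : struct_node P w by apply: (hs _ sw'); apply/strict_prefix_rcons; exact: prefix_refl.
case: (IH (tree_parent tw) sw' hs') => [wt|[tw2 ne]]; last by right; apply/strict_prefix_rcons.
case: (classic (w = t)) => [<-|ne]; first by right; apply/strict_prefix_rcons; exact: prefix_refl.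
have [k hk] := strict_prefix_child (conj wt ne).
have [ch _] := structural_child sww.
have k0 : k = 0 by apply/ch; exact: tree_prefix tt hk.
have j0 : j = 0 by apply/ch.
by left; rewrite j0 -k0.
Qed.

Lemma contr_rcons_inv t u i : tree t -> contr t = rcons u i ->
  exists t', tree (rcons t' i) /\ ~ struct_node P t' /\ contr t' = u /\
             prefix (rcons t' i) t.
Proof.
elim/last_ind: t => [|t j IH] //; first by case: u.
move=> ht; rewrite contr_rcons; case: (structuralP t) => [_ e|nt].
  have [t' [h1 [h2 [h3 h4]]]] := IH (tree_parent ht) e.
  by exists t'; do 3!split=> //; exact: prefix_trans h4 (prefix_rcons _ _).
move/eqP; rewrite eqseq_rcons => /andP[/eqP <- /eqP ej]; subst j.
by exists t; do 3!split=> //; exact: prefix_refl.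
Qed.

Definition node_seq t := (plab P t).1.
Definition node_board t := (plab P t).2.

Lemma rule_board t r : prule P t = Some r ->
  board_on (iobj I (node_seq t)) (node_board t).
Proof.
move=> e; have [_ [_ [ec _]]] := rule_spec e; rewrite /node_seq /node_board -ec.
by case: r {e ec} => -[G b b'|g G b b'|G b b'|R b bs] /= [].
Qed.

Lemma node_board_ok t : tree t -> board_on (iobj I (node_seq t)) (node_board t).
Proof.
move=> ht; case: (node_cases ht) => [[s e]|[r e]]; last exact: rule_board e.
have [_ [ts [nl [_ el]]]] := bud_spec e.
rewrite /node_seq /node_board el; case: (node_cases ts) => [[s' e']|[r e']].
  by case: nl; case: (bud_spec e').
exact: rule_board e'.
Qed.

Lemma structural_board t : struct_node P t ->
  weakening (node_board t) (node_board (rcons t 0)) \/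
  population (node_board t) (node_board (rcons t 0)) \/
  exists g, covered (node_board t) g /\ reset g (node_board t) (node_board (rcons t 0)).
Proof.
case=> r [e st]; have [_ [_ [ec [_ pl]]]] := rule_spec e.
have pl0 := pl 0; rewrite /node_board -ec pl0; last by case: r e st ec pl pl0 => -[].
case: r e st ec pl pl0 => -[G b b'|g G b b'|G b b'|R b bs] //= v _ _ _ _ _.
- by left; case: v => _ [].
- by right; right; exists g; case: v => _ [_ []].
- by right; left; case: v => _ [].
Qed.

Lemma reset_board t r g : prule P t = Some r -> is_reset_of g (proj1_sig r) ->
  covered (node_board t) g /\ reset g (node_board t) (node_board (rcons t 0)).
Proof.
move=> e ir; have [_ [_ [ec [_ pl]]]] := rule_spec e.
have pl0 := pl 0; rewrite /node_board -ec pl0; last by case: r e ir ec pl pl0 => -[].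
case: r e ir ec pl pl0 => -[G b b'|g' G b b'|G b b'|R b bs] //= v _ ir _ _ _.
by subst g'; case: v => _ [_ []].
Qed.

Lemma annotated_board t r R bb bs : prule P t = Some r -> proj1_sig r = RAnn R bb bs ->
  plab P t = (dconcl R, bb) /\ (forall i, tree (rcons t i) <-> i < darity R) /\
  forall i, i < darity R -> plab P (rcons t i) = (dprem R i, nth bb bs i) /\
    successor (imor I R i) bb (nth bb bs i).
Proof.
move=> e er; have [_ [_ [ec [ch pl]]]] := rule_spec e.
case: r e er ec ch pl => rr v /= _ er ec ch pl.
move: v ec ch pl; rewrite er /= => v ec ch pl.
split; first by rewrite -ec.
split=> // i hi; rewrite pl //; split=> //.
by have [_ [_ h]] := v; case: (h i hi).
Qed.

Definition invariant_at t s th := exists Th, is_lcp P s t Th /\ th <> [::] /\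
  prefix th Th /\ exists u r, tree u /\ prefix s u /\ strict_prefix u t /\
    prule P u = Some r /\ is_reset_of (last 0 th) (proj1_sig r).

Lemma bud_invariant t s : pbud P t = Some s -> exists th, invariant_at t s th.
Proof.
move=> e; case: P_reset => _ [_ h]; have [Th [lc [th [ne [pt rest]]]]] := h _ _ e.
by exists th, Th.
Qed.

Lemma invariant_chip s t Th th w : is_lcp P s t Th -> th <> [::] -> prefix th Th ->
  tree w -> prefix s w -> prefix w t -> last 0 th \in ctrl (node_board w).
Proof.
move=> [h _] ne pt tw sw wt; apply: (mem_prefix (h w tw (conj sw wt))).
apply: (mem_prefix pt); move: ne; clear pt; case/lastP: th => [//|th x _].
by rewrite last_rcons mem_rcons inE eqxx.
Qed.

Lemma topped_along g s t a w : tree t ->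
  (forall v, prefix s v -> strict_prefix v t -> struct_node P v) ->
  prefix s a -> prefix a w -> prefix w t ->
  g_topped g (node_board a) -> g_topped g (node_board w).
Proof.
move=> tt allst sa; elim/last_ind: w => [|w j IH] aw wt Za.
  by move: aw; rewrite prefixs0 => /eqP<-.
case: (prefix_rconsP aw) => [<-|aw'] //.
have sw' : strict_prefix w t.
  by apply: (strict_prefix_trans _ wt); apply/strict_prefix_rcons; exact: prefix_refl.
have stw := allst _ (prefix_trans sa aw') sw'.
have [ch _] := structural_child stw.
have j0 : j = 0 by apply/ch; exact: tree_prefix tt wt.
subst j; have tw := tree_prefix tt sw'.1.
apply: (structural_topped (node_board_ok tw) (node_board_ok (tree_prefix tt wt))
  (IH aw' sw'.1 Za)).
by case: (structural_board stw) => [h|[h|[g' [_ h]]]]; [left|right; left|right; right; exists g'].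
Qed.

(* Every bud path contains an annotated node: on a purely structural cycle,
   the reset of the invariant chip g would make g the top of all its stacks
   all around the cycle, contradicting that g is covered when it is reset. *)
Lemma bud_path_annotated t s : pbud P t = Some s ->
  exists w, prefix s w /\ strict_prefix w t /\ ~ struct_node P w.
Proof.
move=> e; apply: NNPP => nex.
have allst w : prefix s w -> strict_prefix w t -> struct_node P w.
  by move=> h1 h2; apply: NNPP => h3; apply: nex; exists w.
have [th [Th [lc [ne [pt [u [r [tu [su [ut [pr ir]]]]]]]]]]] := bud_invariant e.
set g := last 0 th in ir.
have tt := bud_tree e.
have [_ [ts [_ [[st _] el]]]] := bud_spec e.
have [j hj] := strict_prefix_child ut.
have [ch _] := structural_child (allst _ su ut).
have j0 : j = 0 by apply/ch; exact: tree_prefix tt hj.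
subst j; have [cov rs] := reset_board pr ir.
have Z1 : g_topped g (node_board (rcons u 0)).
  exact: reset_topped (node_board_ok tu) (node_board_ok (tree_prefix tt hj)) rs.
have Zt := topped_along tt allst (prefix_trans su (prefix_rcons _ _)) hj (prefix_refl _) Z1.
have Zs : g_topped g (node_board s) by rewrite /node_board -el.
have Zu := topped_along tt allst (prefix_refl _) su ut.1 Zs.
case: cov => gc hc; have [x [a [S [SS gS]]]] := board_on_occurs (node_board_ok tu) gc.
exact: hc _ _ _ SS (Zu _ _ _ SS gS).
Qed.

Section Strip.
Variable P' : preproof D.
Hypothesis P'_strip : is_strip P P'.

Lemma strip_tree u : ptree P' u <-> exists t, tree t /\ ~ struct_node P t /\ contr t = u.
Proof.
case: P'_strip => h _; rewrite h; split.
  move=> [t [tt ct]]; have [w [tw [nw [_ [cw _]]]]] := structural_exit tt.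
  by exists w; do 2!split=> //; rewrite cw (contract_fun ct).
by move=> [t [tt [_ <-]]]; exists t; split=> //; exact: contract_contr.
Qed.

Lemma strip_tree_contr t : tree t -> ptree P' (contr t).
Proof. by move=> tt; case: P'_strip => -> _; exists t; split=> //; exact: contract_contr. Qed.

Lemma strip_node t : tree t -> ~ struct_node P t ->
  plab P' (contr t) = (plab P t).1 /\
  prule P' (contr t) = obind (@unann _ _ I) (prule P t) /\
  (pbud P t = None -> pbud P' (contr t) = None) /\
  (forall s, pbud P t = Some s -> pbud P' (contr t) = Some (contr s)).
Proof.
move=> tt nt; case: P'_strip => _ [h _].
have [h1 [h2 [h3 h4]]] := h _ _ tt nt (contract_contr t).
do 3!split=> //; move=> s e; have [s' [cs ->]] := h4 _ e.
by rewrite (contract_fun cs).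
Qed.

Lemma strip_outside u : ~ ptree P' u -> pbud P' u = None /\ prule P' u = None.
Proof. by case: P'_strip => _ [_ h]; exact: h. Qed.

Lemma strip_label t : tree t -> plab P' (contr t) = (plab P t).1.
Proof.
move=> tt; have [w [tw [nw [_ [cw [lw _]]]]]] := structural_exit tt.
by rewrite -cw (strip_node tw nw).1 lw.
Qed.

Lemma strip_parent u i : ptree P' (rcons u i) ->
  exists t, tree (rcons t i) /\ ~ struct_node P t /\ contr t = u.
Proof.
move=> /strip_tree [t2 [t2t [_ e]]]; have [t' [h1 [h2 [h3 _]]]] := contr_rcons_inv t2t e.
by exists t'.
Qed.

Lemma strip_bud u s' : pbud P' u = Some s' -> exists t s,
  tree t /\ ~ struct_node P t /\ contr t = u /\ pbud P t = Some s /\ s' = contr s.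
Proof.
move=> e; case: (classic (ptree P' u)) => [pu|npu]; last by rewrite (strip_outside npu).1 in e.
have [t [tt [nt ct]]] := (strip_tree u).1 pu; subst u; have [_ [_ [hn hs]]] := strip_node tt nt.
case E: (pbud P t) => [s|]; last by rewrite hn in e.
by exists t, s; do 4!split=> //; move: e; rewrite (hs _ E) => -[].
Qed.

Lemma strip_rule u R : prule P' u = Some R -> exists t r bb bs,
  tree t /\ ~ struct_node P t /\ contr t = u /\
  prule P t = Some r /\ proj1_sig r = RAnn R bb bs.
Proof.
move=> e; case: (classic (ptree P' u)) => [pu|npu]; last by rewrite (strip_outside npu).2 in e.
have [t [tt [nt ct]]] := (strip_tree u).1 pu; subst u; have [_ [hr _]] := strip_node tt nt.
case E: (prule P t) => [r|]; last by rewrite hr E in e.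
have [R' [bb [bs er]]] := annotated_rule E nt.
by move: e; rewrite hr E /= /unann er => -[<-]; exists t, r, bb, bs.
Qed.

Lemma strip_node_cases u : ptree P' u ->
  (exists s', pbud P' u = Some s') \/ (exists R, prule P' u = Some R).
Proof.
move=> /strip_tree [t [tt [nt <-]]]; have [_ [hr [hn hs]]] := strip_node tt nt.
case: (node_cases tt) => [[s e]|[r e]]; first by left; exists (contr s); exact: hs.
have [R [bb [bs er]]] := annotated_rule e nt.
by right; exists R; rewrite hr e /= /unann er.
Qed.

(* Bud clause: the contracted bud is a leaf, its companion an inner node
   strictly above it (thanks to the annotated node on the bud path). *)
Lemma strip_bud_ok u s' : pbud P' u = Some s' ->
  is_leaf P' u /\ ptree P' s' /\ ~ is_leaf P' s' /\ strict_prefix s' u /\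
  plab P' u = plab P' s'.
Proof.
move=> /strip_bud [t [s [tt [nt [<- [e ->]]]]]].
have [[_ lft] [ts [_ [[st _] el]]]] := bud_spec e.
have [w [sw [wt nw]]] := bud_path_annotated e.
split.
  split; first exact: strip_tree_contr.
  move=> i /strip_parent [t' [h1 [h2 h3]]]; have et := contr_inj (tree_parent h1) tt h2 nt h3.
  by subst t'; exact: lft h1.
split; first exact: strip_tree_contr.
split.
  move=> [_ lf]; have [ws [tws [nws [sws [cws [_ hws]]]]]] := structural_exit ts.
  case: (structural_chain_prefix tws tt sws st hws) => [wst|tws']; last first.
    by have [r [er _]] := hws t st tws'; move: (bud_no_rule e); rewrite er.
  case: (classic (ws = t)) => [ewt|nwt]; first by subst ws; apply: nw; apply: hws sw wt.
  have [j hj] := strict_prefix_child (conj wst nwt).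
  by apply: (lf j); have := strip_tree_contr (tree_prefix tt hj); rewrite contr_annotated // cws.
split.
  split; first exact: contr_prefix.
  move=> ec; have h1 := contr_strict wt.1 nw wt.2.
  have := size_prefix (contr_prefix sw); rewrite ec => h2.
  by have := leq_trans h1 h2; rewrite ltnn.
by rewrite (strip_node tt nt).1 (strip_label ts) el.
Qed.

Lemma strip_rule_ok u R : prule P' u = Some R ->
  ptree P' u /\ pbud P' u = None /\ dconcl R = plab P' u /\
  (forall i, ptree P' (rcons u i) <-> i < darity R) /\
  (forall i, i < darity R -> plab P' (rcons u i) = dprem R i).
Proof.
move=> /strip_rule [t [r [bb [bs [tt [nt [<- [e er]]]]]]]].
have [_ [bn _]] := rule_spec e.
have [lab [ch' pl']] := annotated_board e er.
have [hl [_ [hn _]]] := strip_node tt nt.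
split; first exact: strip_tree_contr.
split; first exact: hn.
split; first by rewrite hl lab.
split.
  move=> i; split.
    move=> /strip_parent [t' [h1 [h2 h3]]]; have et := contr_inj (tree_parent h1) tt h2 nt h3.
    by subst t'; apply/ch'.
  by move=> /ch' hi; have := strip_tree_contr hi; rewrite contr_annotated.
move=> i hi; have := strip_label ((ch' i).2 hi).
by rewrite contr_annotated // (pl' i hi).1.
Qed.

Lemma strip_preproof : is_preproof P'.
Proof.
split; first by have [w [tw [nw [_ [cw _]]]]] := structural_exit tree_root; apply/strip_tree; exists w.
split.
  by move=> u i /strip_parent [t [h1 [h2 h3]]]; apply/strip_tree; exists t; split=> //; exact: tree_parent h1.
split.
  have [l hl] := tree_finite; exists (map contr l) => u /strip_tree [t [tt [_ <-]]].
  by apply: map_f; exact: hl.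
split; first exact: strip_bud_ok.
split; first exact: strip_rule_ok.
move=> u pu nb nr; exfalso.
by case: (strip_node_cases pu) => [[s' e]|[R e]]; [rewrite e in nb | rewrite e in nr].
Qed.

Lemma strip_assumption_free : assumption_free P'.
Proof.
move=> u pu nb nr.
by case: (strip_node_cases pu) => [[s' e]|[R e]]; [rewrite e in nb | rewrite e in nr].
Qed.
End Strip.

(* strip(P) exists: take contractions of the non-structural nodes, choosing
   the (unique) non-structural preimage of each contracted node. *)
Definition preimage (u : node) : option node :=
  match excluded_middle_informative
          (exists t, tree t /\ ~ struct_node P t /\ contr t = u) with
  | left h => Some (proj1_sig (constructive_indefinite_description _ h))
  | right _ => None
  end.

Lemma preimageP u t : preimage u = Some t -> tree t /\ ~ struct_node P t /\ contr t = u.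
Proof.
rewrite /preimage; case: excluded_middle_informative => // h [<-].
by case: constructive_indefinite_description.
Qed.

Lemma preimage_contr t : tree t -> ~ struct_node P t -> preimage (contr t) = Some t.
Proof.
move=> tt nt; rewrite /preimage; case: excluded_middle_informative => [h|[]]; last by exists t.
by congr Some; case: constructive_indefinite_description => t' [h1 [h2 h3]] /=; exact: contr_inj.
Qed.

Definition strip_witness : preproof D := {|
  ptree := fun u => exists t, tree t /\ contract P t u;
  pbud := fun u => if preimage u is Some t then omap contr (pbud P t) else None;
  plab := fun u => if preimage u is Some t then (plab P t).1 else (plab P [::]).1;
  prule := fun u => if preimage u is Some t then obind (@unann _ _ I) (prule P t) else None |}.

Lemma strip_witness_ok : is_strip P strip_witness.
Proof.
split=> //; split.
  move=> t u tt nt ct; rewrite (contract_fun ct) /= (preimage_contr tt nt).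
  do 2!split=> //; split; first by move=> ->.
  by move=> s ->; exists (contr s); split=> //; exact: contract_contr.
move=> u npu /=; case E: (preimage u) => [t|] //; case: npu.
by have [tt [_ <-]] := preimageP E; exists t; split=> //; exact: contract_contr.
Qed.

Section Path.
Variable rho : nat -> node.
Hypothesis path_tree : forall n, tree (rho n).
Hypothesis path_step : forall n,
  (pbud P (rho n) = None /\ exists j, rho n.+1 = rcons (rho n) j) \/
  (pbud P (rho n) = Some (rho n.+1)).

Lemma path_jump n c : pbud P (rho n) = Some c -> rho n.+1 = c.
Proof. by move=> e; case: (path_step n) => [[h _]|h]; rewrite e in h => //; case: h. Qed.

(* A subtree is entered only through its root, since jumps go upwards. *)
Lemma path_entry m m' u : m < m' -> ~~ prefix u (rho m) -> prefix u (rho m') ->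
  exists m'', m < m'' <= m' /\ rho m'' = u.
Proof.
elim: m' => [//|m' IH] lt nu pu.
case: (boolP ((m < m') && prefix u (rho m'))) => [/andP[lt' pu']|h].
  by have [m'' [/andP[h1 h2] e]] := IH lt' nu pu'; exists m''; rewrite h1 /= ltnW.
have nu' : ~~ prefix u (rho m').
  by move: h; rewrite negb_and => /orP[h|//]; have -> : m' = m by lia.
case: (path_step m') => [[_ [j ej]]|eb].
  rewrite ej in pu; case: (prefix_rconsP pu) => [eu|pu2]; last by rewrite pu2 in nu'.
  by exists m'.+1; rewrite lt leqnn ej eu.
have [_ [_ [_ [[sb _] _]]]] := bud_spec eb.
by move: nu'; rewrite (prefix_trans pu sb).
Qed.

Lemma path_exit (Q : node -> Prop) m :
  (forall t j, Q t -> Q (rcons t j)) -> (forall j, Q (rcons (rho m) j)) ->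
  (exists m', m < m' /\ ~ Q (rho m')) ->
  exists m1, m <= m1 /\ (m < m1 -> Q (rho m1)) /\ ~ Q (rho m1.+1) /\
             pbud P (rho m1) = Some (rho m1.+1).
Proof.
move=> closed child [m' [mm' nq]].
have ex : exists k, (m < k) && ~~ asbool (Q (rho k)).
  by exists m'; rewrite mm'; case: asboolP.
case: (ex_minnP ex) => k /andP[mk /asboolP nk] kmin.
have inQ k' : m < k' < k -> Q (rho k').
  move=> /andP[h1 h2]; apply/asboolP; apply: contraTT h2 => h; rewrite -leqNgt.
  by apply: kmin; rewrite h1.
exists k.-1; have ek : k.-1.+1 = k by lia.
split; first by lia.
split; first by move=> h; apply: inQ; lia.
rewrite ek; split=> //.
case: (path_step k.-1) => [[_ [j ej]]|]; last by rewrite ek.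
case: nk; rewrite -ek ej.
case: (eqVneq k.-1 m) => [->|ne]; first exact: child.
by apply: closed; apply: inQ; lia.
Qed.

(* Some tail of the path only visits nodes that are visited infinitely
   often (the tree is finite). *)
Lemma path_recurrent : exists N0, forall m, N0 <= m ->
  forall M, exists m', M <= m' /\ rho m' = rho m.
Proof.
have [l hl] := tree_finite.
suff [N0 h] : exists N0, forall m, N0 <= m -> rho m \in l ->
    forall M, exists m', M <= m' /\ rho m' = rho m.
  by exists N0 => m Nm; apply: h Nm (hl _ (path_tree m)).
clear hl; elim: l => [|w l' [N1 IH]]; first by exists 0.
case: (classic (forall M, exists m', M <= m' /\ rho m' = w)) => [io|nio].
  by exists N1 => m Nm; rewrite inE => /orP[/eqP ->|/IH]; [|exact].
have [M0 hM0] : exists M0, forall m', M0 <= m' -> rho m' <> w.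
  apply: NNPP => nex; apply: nio => M; apply: NNPP => nex2; apply: nex; exists M.
  by move=> m' hm e; apply: nex2; exists m'.
exists (maxn N1 M0) => m; rewrite geq_max => /andP[h1 h2]; rewrite inE.
by case/orP=> [/eqP e|]; [case: (hM0 _ h2 e) | exact: IH].
Qed.

Lemma path_lowest : exists m0,
  (forall m, m0 <= m -> prefix (rho m0) (rho m)) /\
  (forall m, m0 <= m -> forall M, exists m', M <= m' /\ rho m' = rho m).
Proof.
have [N0 hio] := path_recurrent.
have exk : exists k, asbool (exists m, N0 <= m /\ size (rho m) = k).
  by exists (size (rho N0)); apply/asboolP; exists N0.
case: (ex_minnP exk) => k0 /asboolP [m0 [Nm0 sm0]] kmin.
have szge m : N0 <= m -> k0 <= size (rho m).
  by move=> Nm; apply: kmin; apply/asboolP; exists m.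
exists m0; split; last by move=> m hm; apply: hio; exact: leq_trans Nm0 hm.
move=> m /subnKC <-; elim: (m - m0) => [|d IH]; first by rewrite addn0 prefix_refl.
rewrite addnS; case: (path_step (m0 + d)) => [[_ [j ->]]|eb].
  exact: prefix_trans IH (prefix_rcons _ _).
have [_ [_ [_ [[sb _] _]]]] := bud_spec eb.
case: (prefix_total IH sb) => // h.
suff -> : rho (m0 + d).+1 = rho m0 by exact: prefix_refl.
apply: (prefix_size_eq h (prefix_refl _)); apply/eqP; rewrite eqn_leq size_prefix // sm0.
by apply: szge; lia.
Qed.

Section Tail.
Variable m0 : nat.
Hypothesis tail_below : forall m, m0 <= m -> prefix (rho m0) (rho m).
Hypothesis tail_recurrent : forall m, m0 <= m ->
  forall M, exists m', M <= m' /\ rho m' = rho m.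

Local Notation root := (rho m0).

Definition active t := (exists c, pbud P t = Some c) /\ exists m, m0 <= m /\ rho m = t.

Lemma active_visits t : active t -> forall M, exists m, M <= m /\ m0 <= m /\ rho m = t.
Proof.
move=> [_ [m [hm e]]] M; have [m' [h1 h2]] := tail_recurrent hm (maxn M m0).
by exists m'; rewrite -e h2; move: h1; rewrite geq_max => /andP[-> ->].
Qed.

Lemma active_companion t c : pbud P t = Some c -> active t -> prefix root c.
Proof.
move=> e act; have [m [_ [hm em]]] := active_visits act 0.
have <- : rho m.+1 = c by apply: path_jump; rewrite em.
by apply: tail_below; exact: leqW.
Qed.

Lemma tail_bud m1 : m0 <= m1 -> pbud P (rho m1) = Some (rho m1.+1) -> active (rho m1).
Proof. by move=> h e; split; [exists (rho m1.+1) | exists m1]. Qed.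

Lemma tail_on_bud_path m : m0 <= m -> exists t c, pbud P t = Some c /\ active t /\
  prefix c (rho m) /\ prefix (rho m) t.
Proof.
move=> hm; set v := rho m.
pose Q x := prefix v x /\ x <> v.
have closed t j : Q t -> Q (rcons t j).
  move=> [vt _]; split; first exact: prefix_trans vt (prefix_rcons _ _).
  by move=> e; have := size_prefix vt; rewrite -e size_rcons ltnn.
have [m1 [hm1 [inQ [nq eb]]]] : exists m1, m <= m1 /\ (m < m1 -> Q (rho m1)) /\
    ~ Q (rho m1.+1) /\ pbud P (rho m1) = Some (rho m1.+1).
  apply: (path_exit (Q := Q)) => //.
    by move=> j; split; [exact: prefix_rcons | exact: rcons_neq].
  have [m' [h1 h2]] := tail_recurrent (leqnn m0) m.+1; exists m'; split=> // -[vr ne].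
  by apply: ne; apply: (prefix_antisym _ vr); rewrite h2 /v; apply: tail_below.
have vt : prefix v (rho m1).
  by case: (ltngtP m m1) hm1 => // [/inQ [] //|<-] _; exact: prefix_refl.
have [_ [_ [_ [[sb _] _]]]] := bud_spec eb.
exists (rho m1), (rho m1.+1); split=> //; split; first exact: tail_bud (leq_trans hm hm1) eb.
split=> //; case: (prefix_total vt sb) => // h.
by case: (classic (rho m1.+1 = v)) => [->|ne]; [exact: prefix_refl | case: nq].
Qed.

Lemma companion_exit t c : pbud P t = Some c -> active t -> c <> root ->
  exists t' c', pbud P t' = Some c' /\ active t' /\ strict_prefix c' c /\
                prefix c t' /\ prefix root c'.
Proof.
move=> e act nc; have [m [_ [hm em]]] := active_visits act 0.
have ec : rho m.+1 = c by apply: path_jump; rewrite em.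
have [m1 [hm1 [inQ [nq eb]]]] : exists m1, m.+1 <= m1 /\
    (m.+1 < m1 -> prefix c (rho m1)) /\ ~ prefix c (rho m1.+1) /\
    pbud P (rho m1) = Some (rho m1.+1).
  apply: (path_exit (Q := fun x => prefix c x)).
  - by move=> u j cu; exact: prefix_trans cu (prefix_rcons _ _).
  - by move=> j; rewrite ec; exact: prefix_rcons.
  have [m' [h1 h2]] := tail_recurrent (leqnn m0) m.+2; exists m'; split=> // cr.
  by rewrite h2 in cr; apply: nc; apply: (prefix_antisym cr); rewrite -ec; apply: tail_below; lia.
have ct : prefix c (rho m1).
  by case: (ltngtP m.+1 m1) hm1 => // [/inQ //|<-] _; rewrite ec prefix_refl.
have [_ [_ [_ [[sb _] _]]]] := bud_spec eb.
exists (rho m1), (rho m1.+1); split=> //; split; first by apply: tail_bud eb; lia.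
case: (prefix_total ct sb) => h; first by case: nq.
split; first by split=> // e'; apply: nq; rewrite e' prefix_refl.
by split=> //; apply: tail_below; lia.
Qed.

(* Some active bud has the root as companion: the step into each later
   visit of the root is a jump. *)
Lemma root_bud : exists t0, pbud P t0 = Some root /\ active t0.
Proof.
have [m' [h1 h2]] := tail_recurrent (leqnn m0) m0.+1.
have em' : m'.-1.+1 = m' by lia.
have bw : prefix root (rho m'.-1) by apply: tail_below; lia.
case: (path_step m'.-1) => [[_ [j ej]]|eb].
  move: (f_equal size ej); rewrite em' h2 size_rcons => e.
  by have := size_prefix bw; rewrite -ltnS -e ltnn.
exists (rho m'.-1); rewrite -h2 -em'; split=> //; apply: tail_bud eb; lia.
Qed.

Lemma minimal_invariant : exists t1 c1 th1,
  pbud P t1 = Some c1 /\ active t1 /\ invariant_at t1 c1 th1 /\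
  forall t c th, pbud P t = Some c -> active t -> invariant_at t c th ->
    size th1 <= size th.
Proof.
pose has k := asbool (exists t c th, pbud P t = Some c /\ active t /\
                                     invariant_at t c th /\ size th = k).
have [t0 [e0 act0]] := root_bud; have [th0 h0] := bud_invariant e0.
have ex : exists k, has k by exists (size th0); apply/asboolP; exists t0, root, th0.
case: (ex_minnP ex) => k /asboolP [t1 [c1 [th1 [e1 [act1 [h1 <-]]]]]] kmin.
exists t1, c1, th1; do 3!split=> //; move=> t c th e act h.
by apply: kmin; apply/asboolP; exists t, c, th.
Qed.

Section MinimalInvariant.
Variables (t1 c1 : node) (th1 : seq nat).
Hypothesis bud1 : pbud P t1 = Some c1.
Hypothesis active1 : active t1.
Hypothesis inv1 : invariant_at t1 c1 th1.
Hypothesis minimal1 : forall t c th, pbud P t = Some c -> active t ->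
  invariant_at t c th -> size th1 <= size th.

Definition extends_minimal t c := exists th, invariant_at t c th /\ prefix th1 th.

(* Two bud paths sharing a node w: both invariants are prefixes of the
   control at w, hence comparable, and minimality forces the extension. *)
Lemma extends_minimal_shared a ca t c w : pbud P t = Some c -> active t ->
  extends_minimal a ca -> tree w -> prefix ca w -> prefix w a ->
  prefix c w -> prefix w t -> extends_minimal t c.
Proof.
move=> e act [tha [[Tha [lca [_ [pa _]]]] p1]] tw caw wa cw wt.
have [th hth] := bud_invariant e; have [Th [lc [_ [pt _]]]] := hth.
have p1' := prefix_trans p1 (prefix_trans pa ((proj1 lca) w tw (conj caw wa))).
have pt' := prefix_trans pt ((proj1 lc) w tw (conj cw wt)).
exists th; split=> //; case: (prefix_total p1' pt') => // h.
suff -> : th = th1 by exact: prefix_refl.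
apply: (prefix_size_eq h (prefix_refl th1)); apply/eqP.
by rewrite eqn_leq size_prefix // (minimal1 e act hth).
Qed.

(* Every active bud is linked to the root bud t0 by a chain of bud paths
   with pairwise shared nodes, climbing companion by companion. *)
Lemma extends_minimal_root t0 : pbud P t0 = Some root -> active t0 ->
  forall t c, pbud P t = Some c -> active t ->
  (extends_minimal t c <-> extends_minimal t0 root).
Proof.
move=> e0 act0 t c e act.
have [_ [_ [_ [[rt0 _] _]]]] := bud_spec e0.
have troot : tree root := path_tree m0.
have at_root t' : pbud P t' = Some root -> active t' ->
    (extends_minimal t' root <-> extends_minimal t0 root).
  move=> e' act'; have [_ [_ [_ [[rt' _] _]]]] := bud_spec e'; split=> h.
    exact: extends_minimal_shared e0 act0 h troot (prefix_refl _) rt' (prefix_refl _) rt0.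
  exact: extends_minimal_shared e' act' h troot (prefix_refl _) rt0 (prefix_refl _) rt'.
move: {2}(size c - size root) (leqnn (size c - size root)) => d.
elim: d t c e act => [|d IH] t c e act hd;
  have [_ [tc [_ [[ct _] _]]]] := bud_spec e; have rc := active_companion e act.
  suff ecr : c = root by subst c; exact: at_root.
  apply: (prefix_size_eq (prefix_refl c) rc); apply/eqP.
  by rewrite eqn_leq (size_prefix rc) andbT -subn_eq0 -leqn0.
case: (classic (c = root)) => [ecr|ncr]; first by subst c; exact: at_root.
have [t' [c' [e' [act' [[c'c nc'c] [ct' rc']]]]]] := companion_exit e act ncr.
have hd' : size c' - size root <= d.
  have lc : size c' < size c.
    rewrite ltn_neqAle size_prefix // andbT; apply/negP => /eqP h; apply: nc'c.
    exact: prefix_size_eq c'c (prefix_refl c) h.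
  rewrite -ltnS; apply: leq_trans hd.
  exact: ltn_sub2r (leq_ltn_trans (size_prefix rc') lc) lc.
rewrite -(IH _ _ e' act' hd'); split=> h.
  exact: extends_minimal_shared e' act' h tc (prefix_refl _) ct c'c ct'.
exact: extends_minimal_shared e act h tc c'c ct' (prefix_refl _) ct.
Qed.

Lemma extends_minimal_all t c : pbud P t = Some c -> active t -> extends_minimal t c.
Proof.
move=> e act; have [t0 [e0 act0]] := root_bud.
apply/(extends_minimal_root e0 act0 e act).
apply/(extends_minimal_root e0 act0 bud1 active1).
by exists th1; split=> //; exact: prefix_refl.
Qed.
End MinimalInvariant.

(* The top chip g of the minimal invariant stays in the control along the
   whole tail, and the g-reset of the minimal invariant is passed infinitely
   often: after each visit of t1 the path jumps to c1 and returns to t1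
   through the reset node. *)
Lemma tail_persistent_reset : exists g,
  (forall n, m0 <= n -> g \in ctrl (node_board (rho n))) /\
  (forall M, exists n, M <= n /\ m0 <= n /\
     exists r, prule P (rho n) = Some r /\ is_reset_of g (proj1_sig r)).
Proof.
have [t1 [c1 [th1 [e1 [act1 [inv1 min1]]]]]] := minimal_invariant.
have [Th1 [_ [ne1 [_ [u [r [_ [c1u [ut1 [pr ir]]]]]]]]]] := inv1.
exists (last 0 th1); split.
  move=> n hn; have [t [c [e [act [cn nt]]]]] := tail_on_bud_path hn.
  have [th [[Th [lc [_ [pt _]]]] p1]] := extends_minimal_all e1 act1 inv1 min1 e act.
  exact: invariant_chip lc ne1 (prefix_trans p1 pt) (path_tree n) cn nt.
move=> M; have [mA [hMA [hmA eA]]] := active_visits act1 M.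
have ecA : rho mA.+1 = c1 by apply: path_jump; rewrite eA.
case: (classic (u = c1)) => [euc|nuc].
  exists mA.+1; split; first exact: leqW hMA.
  by split; [exact: leqW hmA | exists r; rewrite ecA -euc].
have [mB [hmB [_ eB]]] := active_visits act1 mA.+2.
have nu : ~~ prefix u (rho mA.+1).
  by rewrite ecA; apply/negP => h; apply: nuc; exact: prefix_antisym.
have ut : prefix u (rho mB) by rewrite eB; case: ut1.
have lt : mA.+1 < mB by lia.
have [n [/andP[h1 h2] en]] := path_entry lt nu ut.
exists n; split; first lia.
by split; [lia | exists r; rewrite en].
Qed.
End Tail.

Theorem path_persistent_reset : exists g N,
  (forall n, N <= n -> g \in ctrl (node_board (rho n))) /\
  (forall M, exists n, M <= n /\ N <= n /\
     exists r, prule P (rho n) = Some r /\ is_reset_of g (proj1_sig r)).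
Proof.
have [m0 [below rec]] := path_lowest.
by have [g h] := tail_persistent_reset below rec; exists g, m0.
Qed.
End Path.

Section Lift.
Variable P' : preproof D.
Hypothesis P'_strip : is_strip P P'.
Variable pi : nat -> node.
Hypothesis pi_branch : is_branch P' pi.

(* lift n = (rho n, k n): the n-th node of the path in P and the index of
   the branch node it contracts to. *)
Fixpoint lift (n : nat) : node * nat :=
  match n with
  | 0 => ([::], 0)
  | n'.+1 => let (t, k) := lift n' in
      if structural t then (rcons t 0, k) else
      match pbud P t with
      | Some s => (s, k.+1)
      | None => (rcons t (last 0 (pi k.+1)), k.+1)
      end
  end.

Definition rho n := (lift n).1.
Definition idx n := (lift n).2.

Lemma lift_S n : lift n.+1 =
  if structural (rho n) then (rcons (rho n) 0, idx n) else
  match pbud P (rho n) with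
  | Some s => (s, (idx n).+1)
  | None => (rcons (rho n) (last 0 (pi (idx n).+1)), (idx n).+1)
  end.
Proof. by rewrite /rho /idx /=; case: (lift n). Qed.

Lemma rho_S n : rho n.+1 = if structural (rho n) then rcons (rho n) 0 else
  match pbud P (rho n) with
  | Some s => s | None => rcons (rho n) (last 0 (pi (idx n).+1)) end.
Proof. by rewrite {1}/rho lift_S; case: (structural _) => //; case: (pbud _ _). Qed.

Lemma idx_S n : idx n.+1 = if structural (rho n) then idx n else (idx n).+1.
Proof. by rewrite {1}/idx lift_S; case: (structural _) => //; case: (pbud _ _). Qed.

Lemma idx_mono m n : m <= n -> idx m <= idx n.
Proof.
move=> /subnKC <-; elim: (n - m) => [|d IH]; first by rewrite addn0.
by rewrite addnS idx_S; case: (structural _) => //; exact: leq_trans IH (leqnSn _).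
Qed.

Lemma strip_bud_leaf u s' : pbud P' u = Some s' -> is_leaf P' u.
Proof. by case/(strip_bud_ok P'_strip). Qed.

Lemma lift_on_branch n : tree (rho n) /\ contr (rho n) = pi (idx n).
Proof.
elim: n => [|n [tn cn]]; first by split; [exact: tree_root | case: pi_branch => ->].
have [hnl hl] := pi_branch.2 (idx n).
rewrite /rho /idx lift_S; case: (structuralP (rho n)) => [st|nt] /=.
  have [ch _] := structural_child st.
  by split; [exact/ch | rewrite contr_rcons; case: structuralP].
have [_ [hr [hn hs]]] := strip_node P'_strip tn nt.
case eb: (pbud P (rho n)) => [s|] /=.
  have [_ [ts _]] := bud_spec eb.
  have e' := hs _ eb; rewrite cn in e'.
  by have := hl (strip_bud_leaf e'); rewrite e' => -[<-].
have [r er] : exists r, prule P (rho n) = Some r.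
  by case E: (prule P (rho n)) => [r|]; [exists r | case: (P_assumption_free tn eb E)].
have [R [bb [bs eR]]] := annotated_rule er nt.
have [_ [ch _]] := annotated_board er eR.
have nl : ~ is_leaf P' (pi (idx n)) by move/hl; rewrite -cn hn.
have [j [ej pj]] := hnl nl.
have rR : prule P' (pi (idx n)) = Some R by rewrite -cn hr er /= /unann eR.
have [_ [_ [_ [chR _]]]] := strip_rule_ok P'_strip rR.
rewrite ej last_rcons in pj *.
by split; [apply/ch; apply/chR | rewrite contr_annotated // cn].
Qed.

Lemma lift_step n : (pbud P (rho n) = None /\ exists j, rho n.+1 = rcons (rho n) j) \/
  (pbud P (rho n) = Some (rho n.+1)).
Proof.
rewrite rho_S; case: (structuralP (rho n)) => [st|nt] /=.
  left; split; last by exists 0.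
  by case: st => r [e _]; have [_ [h _]] := rule_spec e.
by case eb: (pbud P (rho n)) => [s|] /=; [right | left; split=> //; eexists].
Qed.

Definition lift_dom n := iobj I (node_seq (rho n)).
Definition lift_board n := node_board (rho n).
Definition lift_rel n (x : Pos I) (c : A) (y : Pos I) : Prop :=
  if structural (rho n) then x = y /\ c = azero A /\ lift_dom n x
  else branch_mor (I := I) P' pi (idx n) x c y.

Lemma lift_structural_step n : struct_node P (rho n) ->
  identity_step lift_dom lift_rel n /\
  structural_change (lift_board n) (lift_board n.+1).
Proof.
move=> st; have sst : structural (rho n) by apply/structuralP.
split; first by move=> x c y; rewrite /lift_rel sst.
rewrite /lift_board rho_S sst.
by case: (structural_board st) => [h|[h|h]]; right; [left|right; left|right; right].
Qed.

Lemma lift_bud_step n s : ~ struct_node P (rho n) -> pbud P (rho n) = Some s ->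
  identity_step lift_dom lift_rel n /\ lift_board n.+1 = lift_board n.
Proof.
move=> nt eb; have [tn cn] := lift_on_branch n.
have nsn : structural (rho n) = false by apply/negbTE/structuralP.
have [hl [hr [hn hs]]] := strip_node P'_strip tn nt.
have er : rho n.+1 = s by rewrite rho_S nsn eb.
have ek : idx n.+1 = (idx n).+1 by rewrite idx_S nsn.
split; last by rewrite /lift_board er /node_board; have [_ [_ [_ [_ ->]]]] := bud_spec eb.
move=> x c y; rewrite /lift_rel nsn; split.
  case=> [[j [R [_ [e _]]]]|[_ [-> [-> h]]]].
    by rewrite -cn hr (bud_no_rule eb) in e.
  by do 2!split=> //; move: h; rewrite -cn hl.
move=> [-> [-> h]]; right; split.
  by rewrite -cn (hs _ eb) -ek -(lift_on_branch n.+1).2 er.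
by do 2!split=> //; rewrite -cn hl.
Qed.

Lemma lift_rule_step n : ~ struct_node P (rho n) -> pbud P (rho n) = None ->
  successor (lift_rel n) (lift_board n) (lift_board n.+1).
Proof.
move=> nt eb; have [tn cn] := lift_on_branch n.
have nsn : structural (rho n) = false by apply/negbTE/structuralP.
have [hl [hr [hn hs]]] := strip_node P'_strip tn nt.
have [r er0] : exists r, prule P (rho n) = Some r.
  by case E: (prule P (rho n)) => [r|]; [exists r | case: (P_assumption_free tn eb E)].
have [R [bb [bs eR]]] := annotated_rule er0 nt.
have [lab [ch pl]] := annotated_board er0 eR.
set j := last 0 (pi (idx n).+1).
have er : rho n.+1 = rcons (rho n) j by rewrite rho_S nsn eb.
have hj : j < darity R by apply/ch; rewrite -er; exact: (lift_on_branch n.+1).1.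
have [l1 sc] := pl j hj.
have epi : pi (idx n).+1 = rcons (pi (idx n)) j.
  have ek : idx n.+1 = (idx n).+1 by rewrite idx_S nsn.
  by rewrite -ek -(lift_on_branch n.+1).2 er contr_annotated // cn.
have rel x c y : imor I R j x c y <-> lift_rel n x c y.
  rewrite /lift_rel nsn; split.
    by move=> h; left; exists j, R; rewrite epi -cn hr er0 /= /unann eR.
  case=> [[j' [R' [e1 [e2 e3]]]]|[e _]]; last by rewrite -cn (hn eb) in e.
  move: e1; rewrite epi => /eqP; rewrite eqseq_rcons => /andP[_ /eqP ej]; subst j'.
  by move: e2 e3; rewrite -cn hr er0 /= /unann eR => -[<-].
rewrite /lift_board er /node_board l1 lab /=.
move: sc => [sstar [nu [old [newc [h1 rest]]]]].
exists sstar, nu, old, newc; split=> // y a S; rewrite h1.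
by split=> -[x [b0 [c [h2 [h3 h4]]]]]; exists x, b0, c; do 2!split=> //; apply/rel.
Qed.

Lemma lift_step_kind n :
  (identity_step lift_dom lift_rel n /\
   structural_change (lift_board n) (lift_board n.+1)) \/
  successor (lift_rel n) (lift_board n) (lift_board n.+1).
Proof.
case: (structuralP (rho n)) => [st|nt]; first by left; exact: lift_structural_step.
case eb: (pbud P (rho n)) => [s|]; last by right; exact: lift_rule_step.
by have [T e] := lift_bud_step nt eb; left; split=> //; left.
Qed.

Lemma lift_segment m L x v z : segcomp lift_rel m L x v z ->
  segcomp (branch_mor (I := I) P' pi) (idx m) (idx (m + L) - idx m) x v z.
Proof.
elim: L v z => [|L IH] v z; first by rewrite addn0 subnn.
move=> [y [a [b0 [/IH h1 [h2 ->]]]]].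
rewrite addnS idx_S; move: h2; rewrite /lift_rel; case: (structural (rho (m + L))).
  by move=> [<- [-> _]]; rewrite ajoin0r.
by move=> h2; exact: segcomp_snoc (idx_mono (leq_addr L m)) h1 h2.
Qed.

Theorem strip_branch_trace :
  trace_cond (branch_dom (I := I) P' pi) (branch_mor (I := I) P' pi).
Proof.
have [g [N [gin io]]] := path_persistent_reset (fun n => (lift_on_branch n).1) lift_step.
have often M : exists n, M <= n /\ N <= n /\ g0_reset lift_dom lift_board lift_rel g n.
  have [n [h1 [h2 [r [pr ir]]]]] := io M; exists n; do 2!split=> //.
  have st : struct_node P (rho n) by exists r; split=> //; case: (proj1_sig r) ir.
  have [cov rs] := reset_board pr ir.
  split; first exact: (lift_structural_step st).1.
  by rewrite /lift_board rho_S; move/structuralP: st => ->.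
have [k [sq [hk hs]]] := safra_trace (fun n => iobj_fin I _)
  (fun n => node_board_ok (lift_on_branch n).1) lift_step_kind gin often.
exists (fun i => idx (k i)), sq; split.
  move=> i; have [_ /lift_segment] := hs i; rewrite subnKC; last exact: ltnW.
  case: (ltngtP (idx (k i)) (idx (k i.+1))) (idx_mono (ltnW (hk i))) => // -> _.
  by rewrite subnn => -[_ e]; case: (aalpha_neq0 e).
move=> i; have [d sg] := hs i; split.
  by rewrite /branch_dom -(lift_on_branch (k i)).2 (strip_label P'_strip (lift_on_branch (k i)).1).
by have := lift_segment sg; rewrite subnKC //; exact: ltnW.
Qed.
End Lift.
End ResetProof.

Theorem mainTheorem9 (D : DerivSys) (A : ActAlg) (I : TraceInterp D A)
    (P : preproof (RSys I)) :
  reset_proof P ->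
  (exists P' : preproof D, is_strip P P') /\
  (forall P' : preproof D, is_strip P P' ->
     trace_proof I P' /\ plab P' [::] = (plab P [::]).1).
Proof.
move=> RP; split; first by exists (strip_witness P); exact: strip_witness_ok.
move=> P' SP; split; last by have := strip_label RP SP (tree_root RP).
split; first exact: (strip_preproof RP SP).
split; first exact: (strip_assumption_free RP SP).
by move=> pi Hpi; exact: (strip_branch_trace RP SP Hpi).
Qed.
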